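(* Let $T>0$, $H_T=(0,T)\times(0,\infty)$, $\tilde U\in C([0,T])$ with $\tilde U\le0$, and let $w\ge0$ be a classical solution of $$\partial_tw-w^2+\partial_y^{-1}(w+\tilde U)\,\partial_yw-2\tilde Uw+\int_{+\infty}^yw\,dy'-\partial_y^2w=0\ \text{ in }H_T,\qquad w|_{y=0}=-\tilde U(t),\quad\lim_{y\to+\infty}w=0,$$ with $\sup_{H_T}(|w|+|\partial_yw|)e^{y}<\infty$. Let $\rho$ be an admissible weight with constants $C_f,\beta$ and set $G(t)=\int_0^\infty\rho(y)w(t,y)dy$. Then for $t\in(0,T)$, $$\frac{dG}{dt}\ge\frac{2(1-\beta)}{\|\rho\|_{L^1(\mathbb R_+)}}G^2-\|\tilde U\|_{L^\infty([0,T])}(3+C_f)\,G.$$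
   Context: $\partial_y^{-1}f(t,y):=\int_0^yf(t,y')dy'$. Admissible weight: $\rho:[0,\infty)\to[0,\infty)$, $\rho\in W^{2,\infty}(\mathbb R_+)\cap C^1(\mathbb R_+)\cap L^1(\mathbb R_+)$, with $\rho=f$ on $[0,B]$ and $\rho=g$ on $(B,\infty)$, for numbers $0<A<M_0<B<\infty$, functions $f\in C^1([0,B])\cap C^2([0,B]\setminus\{A\})$, $g\in C^2([M_0,\infty))\cap L^1([M_0,\infty))$, a cut-off $\eta\in C^\infty(\mathbb R)$ with $\eta=0$ on $(-\infty,M_0)$, $\eta=1$ on $(B,\infty)$, $0\le\eta'\le\frac{2}{B-M_0}$, and constants $C_f>0$, $\beta\in(0,1)$, such that: (F1) $f(0)=0$, $f>0$ on $(0,B]$; (F2) $yf'(y)\le C_ff(y)$ on $[0,B]$; (F3) $\int_0^yf\,dy'+f''(y)\ge0$ on $[0,B]\setminus\{A\}$; (F4) $f''\le0$ on $[0,B]\setminus\{A\}$; (G1) $\lim_{y\to\infty}g=\lim_{y\to\infty}g'=0$, $g>0$ on $(M_0,\infty)$; (G2) $g'<0$, $g''>0$ on $(M_0,\infty)$; (G3) $\frac{(g')^2}{gg''}\le\beta$ on $[B,\infty)$; (FG1) $f(B)=g(B)$, $f'(B)=g'(B)$; (FG2) $\eta\frac{(g')^2}{fg''}\le\beta$ and $2\eta'g'+\eta g''-f''\ge0$ on $[M_0,B]$. *)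

From Stdlib Require Import Reals Lra ClassicalEpsilon.
Open Scope R_scope.

Definition cont_within (S : R -> Prop) (f : R -> R) (x : R) : Prop :=
  forall eps, eps > 0 -> exists d, d > 0 /\
    forall x', S x' -> Rabs (x' - x) < d -> Rabs (f x' - f x) < eps.

(* f has derivative l at x relative to the set S (one-sided at endpoints) *)
Definition deriv_within (S : R -> Prop) (f : R -> R) (l x : R) : Prop :=
  forall eps, eps > 0 -> exists d, d > 0 /\
    forall h, h <> 0 -> S (x + h) -> Rabs h < d ->
      Rabs ((f (x + h) - f x) / h - l) < eps.

Definition cont2_on (S : R -> R -> Prop) (F : R -> R -> R) : Prop :=
  forall t y, S t y -> forall eps, eps > 0 -> exists d, d > 0 /\
    forall t' y', S t' y' -> Rabs (t' - t) < d -> Rabs (y' - y) < d ->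
      Rabs (F t' y' - F t y) < eps.

(* Riemann integral of f on [a,b] (0 if f is not Riemann integrable) *)
Definition Rint (f : R -> R) (a b : R) : R :=
  match excluded_middle_informative
          (exists v, exists pr : Riemann_integrable f a b, RiemannInt pr = v) with
  | left H => proj1_sig (constructive_indefinite_description _ H)
  | right _ => 0
  end.

Definition has_lim_inf (F : R -> R) (l : R) : Prop :=
  forall eps, eps > 0 -> exists M, forall b, b >= M -> Rabs (F b - l) < eps.

(* improper integral int_a^infinity f = lim_{b -> oo} int_a^b f (0 if no limit) *)
Definition RintInf (f : R -> R) (a : R) : R :=
  match excluded_middle_informative (exists l, has_lim_inf (fun b => Rint f a b) l) with
  | left H => proj1_sig (constructive_indefinite_description _ H)
  | right _ => 0
  end.

Definition L1_on_half (f : R -> R) (a : R) : Prop :=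
  (forall b, a <= b -> exists pr : Riemann_integrable f a b, True) /\
  exists l, has_lim_inf (fun b => Rint (fun y => Rabs (f y)) a b) l.

Definition smooth (eta : R -> R) : Prop :=
  exists D : nat -> R -> R, D 0%nat = eta /\
    forall n x, derivable_pt_lim (D n) x (D (S n) x).

Definition admissible_weight (rho : R -> R) (Cf beta : R) : Prop :=
  Cf > 0 /\ 0 < beta < 1 /\
  (forall y, 0 <= y -> 0 <= rho y) /\
  (* rho in W^{2,oo}(R+) /\ C^1(R+) /\ L^1(R+):
     rho is C^1 on [0,oo), rho and rho' bounded, rho' Lipschitz, rho in L^1 *)
  (exists drho : R -> R,
      (forall y, 0 <= y -> deriv_within (fun z => 0 <= z) rho (drho y) y) /\
      (forall y, 0 <= y -> cont_within (fun z => 0 <= z) drho y) /\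
      (exists K, forall y, 0 <= y -> Rabs (rho y) <= K /\ Rabs (drho y) <= K) /\
      (exists L, forall y z, 0 <= y -> 0 <= z ->
          Rabs (drho y - drho z) <= L * Rabs (y - z))) /\
  L1_on_half rho 0 /\
  exists (A M0 B : R) (f df ddf g dg ddg eta deta : R -> R),
    0 < A /\ A < M0 /\ M0 < B /\
    (forall y, 0 <= y <= B -> rho y = f y) /\
    (forall y, B < y -> rho y = g y) /\
    (* f in C^1([0,B]) /\ C^2([0,B] \ {A}) *)
    (forall y, 0 <= y <= B -> deriv_within (fun z => 0 <= z <= B) f (df y) y) /\
    (forall y, 0 <= y <= B -> cont_within (fun z => 0 <= z <= B) df y) /\
    (forall y, 0 <= y <= B -> y <> A ->
        deriv_within (fun z => 0 <= z <= B /\ z <> A) df (ddf y) y) /\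
    (forall y, 0 <= y <= B -> y <> A ->
        cont_within (fun z => 0 <= z <= B /\ z <> A) ddf y) /\
    (* g in C^2([M0,oo)) /\ L^1([M0,oo)) *)
    (forall y, M0 <= y -> deriv_within (fun z => M0 <= z) g (dg y) y) /\
    (forall y, M0 <= y -> deriv_within (fun z => M0 <= z) dg (ddg y) y) /\
    (forall y, M0 <= y -> cont_within (fun z => M0 <= z) ddg y) /\
    L1_on_half g M0 /\
    smooth eta /\ (forall x, derivable_pt_lim eta x (deta x)) /\
    (forall x, x < M0 -> eta x = 0) /\ (forall x, B < x -> eta x = 1) /\
    (forall x, 0 <= deta x <= 2 / (B - M0)) /\
    (* (F1)-(F4) *)
    f 0 = 0 /\ (forall y, 0 < y <= B -> f y > 0) /\
    (forall y, 0 <= y <= B -> y * df y <= Cf * f y) /\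
    (forall y, 0 <= y <= B -> y <> A -> Rint f 0 y + ddf y >= 0) /\
    (forall y, 0 <= y <= B -> y <> A -> ddf y <= 0) /\
    (* (G1)-(G3) *)
    has_lim_inf g 0 /\ has_lim_inf dg 0 /\ (forall y, M0 < y -> g y > 0) /\
    (forall y, M0 < y -> dg y < 0 /\ ddg y > 0) /\
    (forall y, B <= y -> (dg y) ^ 2 / (g y * ddg y) <= beta) /\
    (* (FG1)-(FG2) *)
    f B = g B /\ df B = dg B /\
    (forall y, M0 <= y <= B ->
        eta y * (dg y) ^ 2 / (f y * ddg y) <= beta /\
        2 * deta y * dg y + eta y * ddg y - ddf y >= 0).

From Stdlib Require Import Reals Lra ClassicalEpsilon.
From Coquelicot Require Import Coquelicot.
Open Scope R_scope.

(* The mass is approximated by truncations G_n(t) = int_{lo n}^{hi n} rho w(t,.)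
   with lo n -> 0, hi n -> oo; each G_n is differentiable in t with derivative
   int rho d_t w.  For a truncation interval (e,b):
   1. Integration by parts: by the equation, rho d_t w = h + (flux)' with an explicit
      density h (ibp_density) and flux = rho d_y w - rho (W + U y) w, W = int_0^y w.
   2. Dissipation: an explicit correction Omega satisfies h - q >= Omega' on each of
      (0,A), (A,M0), (M0,B), (B,oo), where q = 2(1-beta) rho w^2 + (3+C_f) U rho w is
      the target density; the conditions (F2)-(F4), (G2)-(G3), (FG2) on the weight
      enter here, via the positivity of a quadratic form.
   3. Completing the square, int q >= 2(1-beta) X^2/P - |U|_oo (3+C_f) X for
      X = int rho w and P = int rho over (e,b).
   4. The boundary terms (flux and Omega at e and b) are O(e) + O(1/b) by the
      exponential decay of w and d_y w; the derivatives of the G_n are uniformly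
      Cauchy, so G' = lim G_n' and the inequality passes to the limit. *)

Lemma continuity_pt_eps f x : continuity_pt f x <->
  (forall eps, eps > 0 -> exists d, d > 0 /\
     forall z, Rabs (z - x) < d -> Rabs (f z - f x) < eps).
Proof.
  unfold continuity_pt, continue_in, limit1_in, limit_in; simpl; unfold R_dist. split.
  - intros H0 eps He. destruct (H0 eps He) as [d [Hd H1]]. exists d; split; auto.
    intros z Hz. destruct (Req_dec z x) as [->|Hn].
    + replace (f x - f x) with 0 by ring. rewrite Rabs_R0; lra.
    + apply H1. split; auto. split. exact I. auto.
  - intros H0 eps He. destruct (H0 eps He) as [d [Hd H1]]. exists d; split; auto.
    intros z [_ Hz]. apply H1; auto.
Qed.

Lemma cw_of_cpt S f x : continuity_pt f x -> cont_within S f x.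
Proof.
  intros H eps He. destruct (proj1 (continuity_pt_eps f x) H eps He) as [d [Hd H1]].
  exists d; split; auto.
Qed.

Lemma cpt_of_cw S f x d : d > 0 -> (forall z, Rabs (z - x) < d -> S z) ->
  cont_within S f x -> continuity_pt f x.
Proof.
  intros Hd HS H. apply (proj2 (continuity_pt_eps f x)). intros eps He.
  destruct (H eps He) as [d1 [Hd1 H1]].
  exists (Rmin d d1); split. apply Rmin_pos; lra.
  intros z Hz. apply H1. apply HS. eapply Rlt_le_trans; [exact Hz|apply Rmin_l].
  eapply Rlt_le_trans; [exact Hz|apply Rmin_r].
Qed.

Lemma dpt_of_dw S f l x d : d > 0 -> (forall z, Rabs (z - x) < d -> S z) ->
  deriv_within S f l x -> derivable_pt_lim f x l.
Proof.
  intros Hd HS H eps He. destruct (H eps He) as [d1 [Hd1 H1]].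
  assert (Hm : 0 < Rmin d d1) by (apply Rmin_pos; lra).
  exists (mkposreal _ Hm). intros h Hh Hh2. simpl in Hh2. apply H1; auto.
  - apply HS. replace (x + h - x) with h by ring.
    eapply Rlt_le_trans; [exact Hh2|apply Rmin_l].
  - eapply Rlt_le_trans; [exact Hh2|apply Rmin_r].
Qed.

Lemma cw_of_dw S f l x : S x -> deriv_within S f l x -> cont_within S f x.
Proof.
  intros Sx H eps He.
  destruct (H 1 Rlt_0_1) as [d [Hd H1]].
  assert (Hp : 0 < Rabs l + 1 + 1) by (pose proof (Rabs_pos l); lra).
  exists (Rmin d (eps / (Rabs l + 1 + 1))). split.
  { apply Rmin_pos; auto. apply Rdiv_lt_0_compat; auto. }
  intros x' Sx' Hx'.
  destruct (Req_dec x' x) as [->|Hne].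
  { replace (f x - f x) with 0 by ring; rewrite Rabs_R0; lra. }
  set (h := x' - x). assert (Hh : h <> 0) by (unfold h; lra).
  assert (Hx'' : x' = x + h) by (unfold h; ring).
  assert (Hhd : Rabs h < d) by (eapply Rlt_le_trans; [exact Hx'|apply Rmin_l]).
  assert (Hhe : Rabs h < eps / (Rabs l + 1 + 1))
    by (eapply Rlt_le_trans; [exact Hx'|apply Rmin_r]).
  clearbody h. subst x'. specialize (H1 h Hh Sx' Hhd).
  replace (f (x + h) - f x) with (((f (x + h) - f x) / h - l) * h + l * h) by (field; auto).
  eapply Rle_lt_trans. apply Rabs_triang. rewrite !Rabs_mult.
  assert (Rabs h * (Rabs l + 1 + 1) < eps).
  { apply (Rmult_lt_compat_r (Rabs l + 1 + 1)) in Hhe; auto.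
    replace (eps / (Rabs l + 1 + 1) * (Rabs l + 1 + 1)) with eps in Hhe by (field; lra). lra. }
  pose proof (Rabs_pos h). pose proof (Rabs_pos l). nra.
Qed.

Lemma cw_sub (S1 S2 : R -> Prop) f x :
  (forall z, S2 z -> S1 z) -> cont_within S1 f x -> cont_within S2 f x.
Proof. intros HS H eps He. destruct (H eps He) as [d [Hd H1]]. exists d; split; auto. Qed.

Lemma cw_const S c x : cont_within S (fun _ => c) x.
Proof. intros eps He. exists 1; split; [lra|]. intros. rewrite Rminus_diag, Rabs_R0; lra. Qed.

Lemma cw_plus S f g x : cont_within S f x -> cont_within S g x ->
  cont_within S (fun y => f y + g y) x.
Proof.
  intros Hf Hg eps He. destruct (Hf (eps/2) ltac:(lra)) as [d1 [Hd1 H1]].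
  destruct (Hg (eps/2) ltac:(lra)) as [d2 [Hd2 H2]].
  exists (Rmin d1 d2). split. apply Rmin_pos; lra. intros z Sz Hz.
  specialize (H1 z Sz (Rlt_le_trans _ _ _ Hz (Rmin_l _ _))).
  specialize (H2 z Sz (Rlt_le_trans _ _ _ Hz (Rmin_r _ _))).
  replace (f z + g z - (f x + g x)) with ((f z - f x) + (g z - g x)) by ring.
  eapply Rle_lt_trans. apply Rabs_triang. lra.
Qed.

Lemma cw_opp S f x : cont_within S f x -> cont_within S (fun y => - f y) x.
Proof.
  intros H eps He. destruct (H eps He) as [d [Hd H1]]. exists d; split; auto.
  intros z Hz Hd'. replace (- f z - - f x) with (- (f z - f x)) by ring.
  rewrite Rabs_Ropp; auto.
Qed.

Lemma cw_minus S f g x : cont_within S f x -> cont_within S g x ->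
  cont_within S (fun y => f y - g y) x.
Proof. intros Hf Hg. apply cw_plus; auto. apply cw_opp; auto. Qed.

(* |f g - f x g x| <= |f - f x| |g| + |f x| |g - g x|, with |g| <= |g x| + 1. *)
Lemma cw_mult S f g x : cont_within S f x -> cont_within S g x ->
  cont_within S (fun y => f y * g y) x.
Proof.
  intros Hf Hg eps He.
  set (M := Rabs (f x) + Rabs (g x) + 1).
  assert (HM : M > 0) by (unfold M; pose proof (Rabs_pos (f x)); pose proof (Rabs_pos (g x)); lra).
  set (e := Rmin 1 (eps / (4 * M))).
  assert (He1 : e > 0) by (unfold e; apply Rmin_pos; [lra|apply Rdiv_lt_0_compat; lra]).
  destruct (Hf e He1) as [d1 [Hd1 H1]]. destruct (Hg e He1) as [d2 [Hd2 H2]].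
  exists (Rmin d1 d2). split. apply Rmin_pos; lra.
  intros z Sz Hz.
  specialize (H1 z Sz (Rlt_le_trans _ _ _ Hz (Rmin_l _ _))).
  specialize (H2 z Sz (Rlt_le_trans _ _ _ Hz (Rmin_r _ _))).
  replace (f z * g z - f x * g x) with ((f z - f x) * g z + f x * (g z - g x)) by ring.
  eapply Rle_lt_trans. apply Rabs_triang. rewrite !Rabs_mult.
  assert (He2 : e <= 1) by (unfold e; apply Rmin_l).
  assert (Hgz : Rabs (g z) <= Rabs (g x) + 1).
  { replace (g z) with (g x + (g z - g x)) by ring. eapply Rle_trans. apply Rabs_triang. lra. }
  assert (e * M <= eps / 4).
  { assert (He3 : e <= eps / (4 * M)) by (unfold e; apply Rmin_r).
    apply (Rmult_le_compat_r M) in He3; [|lra].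
    replace (eps / (4 * M) * M) with (eps / 4) in He3 by (field; lra). lra. }
  pose proof (Rabs_pos (f z - f x)). pose proof (Rabs_pos (f x)).
  pose proof (Rabs_pos (g z - g x)). pose proof (Rabs_pos (g x)). pose proof (Rabs_pos (g z)).
  assert (Rabs (f z - f x) * Rabs (g z) <= e * M) by (apply Rmult_le_compat; unfold M; lra).
  assert (Rabs (f x) * Rabs (g z - g x) <= e * M)
    by (rewrite Rmult_comm; apply Rmult_le_compat; unfold M; lra).
  lra.
Qed.

(* The product, sum, difference rules and elementary derivatives, stated for
   applicative expressions [fun y => f y * g y] rather than [(f * g)%F]. *)
Lemma dlim_mult f g x a b : derivable_pt_lim f x a -> derivable_pt_lim g x b ->
  derivable_pt_lim (fun y => f y * g y) x (a * g x + f x * b).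
Proof. intros; apply (derivable_pt_lim_mult f g); auto. Qed.

Lemma dlim_plus f g x a b : derivable_pt_lim f x a -> derivable_pt_lim g x b ->
  derivable_pt_lim (fun y => f y + g y) x (a + b).
Proof. intros; apply (derivable_pt_lim_plus f g); auto. Qed.

Lemma dlim_minus f g x a b : derivable_pt_lim f x a -> derivable_pt_lim g x b ->
  derivable_pt_lim (fun y => f y - g y) x (a - b).
Proof. intros; apply (derivable_pt_lim_minus f g); auto. Qed.

Lemma dlim_const c x : derivable_pt_lim (fun _ => c) x 0.
Proof. apply (derivable_pt_lim_const c). Qed.

Lemma dlim_id x : derivable_pt_lim (fun y => y) x 1.
Proof. apply derivable_pt_lim_id. Qed.

Lemma dlim_eq f x l l' : derivable_pt_lim f x l -> l = l' -> derivable_pt_lim f x l'.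
Proof. intros H ->; auto. Qed.

Lemma dlim_local f g x l d : d > 0 -> (forall z, Rabs (z - x) < d -> f z = g z) ->
  derivable_pt_lim f x l -> derivable_pt_lim g x l.
Proof.
  intros Hd He H eps Hp. destruct (H eps Hp) as [d1 H1].
  assert (Hm : 0 < Rmin d d1) by (apply Rmin_pos; [lra|apply (cond_pos d1)]).
  exists (mkposreal _ Hm). intros h Hh Hh2. simpl in Hh2.
  rewrite <- !He. apply H1; auto. eapply Rlt_le_trans; [exact Hh2|apply Rmin_r].
  rewrite Rminus_diag, Rabs_R0; lra.
  replace (x + h - x) with h by ring. eapply Rlt_le_trans; [exact Hh2|apply Rmin_l].
Qed.

Lemma dlim_lin a b x : derivable_pt_lim (fun y => a + b * y) x b.
Proof.
  apply (dlim_eq _ _ (0 + (0 * x + b * 1))); [|ring].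
  apply dlim_plus. apply dlim_const. apply (dlim_mult (fun _ => b) (fun y => y)).
  apply dlim_const. apply dlim_id.
Qed.

Lemma dlim_exp_opp x : derivable_pt_lim (fun y => exp (- y)) x (- exp (- x)).
Proof.
  apply (dlim_eq (comp exp (fun y => - y)) x (exp (- x) * (-1))); [|ring].
  apply derivable_pt_lim_comp; [|apply derivable_pt_lim_exp].
  apply (dlim_local (fun y => 0 + -1 * y) _ _ _ 1); [lra|intros; ring|apply dlim_lin].
Qed.

Lemma cpt_of_d f x l : derivable_pt_lim f x l -> continuity_pt f x.
Proof. intros H. apply derivable_continuous_pt. exists l; auto. Qed.

Lemma cpt_plus f g x : continuity_pt f x -> continuity_pt g x -> continuity_pt (fun y => f y + g y) x.
Proof. intros; apply (continuity_pt_plus f g); auto. Qed.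

Lemma cpt_minus f g x : continuity_pt f x -> continuity_pt g x -> continuity_pt (fun y => f y - g y) x.
Proof. intros; apply (continuity_pt_minus f g); auto. Qed.

Lemma cpt_mult f g x : continuity_pt f x -> continuity_pt g x -> continuity_pt (fun y => f y * g y) x.
Proof. intros; apply (continuity_pt_mult f g); auto. Qed.

Lemma cpt_const c x : continuity_pt (fun _ => c) x.
Proof. eapply cpt_of_d. apply dlim_const. Qed.

Lemma cpt_id x : continuity_pt (fun y => y) x.
Proof. eapply cpt_of_d. apply dlim_id. Qed.

Ltac cpt_split :=
  repeat first [ apply cpt_minus | apply cpt_plus | apply cpt_mult | apply cpt_const | apply cpt_id ].

Lemma cw_of_d S f x l : derivable_pt_lim f x l -> cont_within S f x.
Proof. intros. apply cw_of_cpt. eapply cpt_of_d; eauto. Qed.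

(* A function continuous on [a,c] (relative to any S containing [a,c]) with
   nonnegative derivative inside is nondecreasing; proved by contradiction via
   the mean value theorem on a slightly smaller interval. *)
Lemma mono_within (S : R -> Prop) (F dF : R -> R) a c : a <= c ->
  (forall z, a <= z <= c -> S z) ->
  (forall x, a <= x <= c -> cont_within S F x) ->
  (forall x, a < x < c -> derivable_pt_lim F x (dF x)) ->
  (forall x, a < x < c -> 0 <= dF x) -> F a <= F c.
Proof.
  intros Hac HS Hc Hd Hp.
  destruct (Req_dec a c) as [->|Hne]; [lra|].
  destruct (Rle_dec (F a) (F c)) as [ok|nok]; auto. exfalso.
  set (del := (F a - F c) / 3).
  assert (Hdel : del > 0) by (unfold del; lra).
  destruct (Hc a ltac:(lra) del Hdel) as [d1 [Hd1 H1]].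
  destruct (Hc c ltac:(lra) del Hdel) as [d2 [Hd2 H2]].
  set (r := Rmin (Rmin d1 d2) ((c - a) / 3)).
  assert (Hr : r > 0) by (unfold r; repeat apply Rmin_pos; lra).
  assert (Hr1 : r <= d1) by (unfold r; eapply Rle_trans; [apply Rmin_l|apply Rmin_l]).
  assert (Hr2 : r <= d2) by (unfold r; eapply Rle_trans; [apply Rmin_l|apply Rmin_r]).
  assert (Hr3 : r <= (c - a) / 3) by (unfold r; apply Rmin_r).
  set (a' := a + r / 2). set (c' := c - r / 2).
  assert (Ha' : Rabs (F a' - F a) < del).
  { apply H1. apply HS. unfold a'; lra. unfold a'. rewrite Rabs_right; lra. }
  assert (Hc' : Rabs (F c' - F c) < del).
  { apply H2. apply HS. unfold c'; lra. unfold c'. rewrite Rabs_left; lra. }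
  assert (Hin : forall x, Rmin a' c' <= x <= Rmax a' c' -> a < x < c).
  { intros x Hx. rewrite Rmin_left in Hx by (unfold a', c'; lra).
    rewrite Rmax_right in Hx by (unfold a', c'; lra). unfold a', c' in Hx; lra. }
  destruct (MVT_gen F a' c' dF) as [xi [Hxi Heq]].
  - intros x Hx. apply is_derive_Reals. apply Hd, Hin. lra.
  - intros x Hx. eapply cpt_of_d. apply Hd, Hin, Hx.
  - assert (0 <= dF xi) by (apply Hp, Hin, Hxi).
    assert (c' - a' > 0) by (unfold a', c'; lra).
    assert (F c' - F a' >= 0) by (rewrite Heq; nra).
    apply Rabs_def2 in Ha'. apply Rabs_def2 in Hc'. unfold del in *. lra.
Qed.

Lemma increment_le (S : R -> Prop) (F dF G dG : R -> R) a c : a <= c ->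
  (forall z, a <= z <= c -> S z) ->
  (forall x, a <= x <= c -> cont_within S F x) ->
  (forall x, a <= x <= c -> cont_within S G x) ->
  (forall x, a < x < c -> derivable_pt_lim F x (dF x)) ->
  (forall x, a < x < c -> derivable_pt_lim G x (dG x)) ->
  (forall x, a < x < c -> dF x <= dG x) ->
  F c - F a <= G c - G a.
Proof.
  intros Hac HS HF HG HdF HdG Hle.
  enough (G a - F a <= G c - F c) by lra.
  apply (mono_within S (fun x => G x - F x) (fun x => dG x - dF x)); auto.
  - intros; apply cw_minus; auto.
  - intros; apply dlim_minus; auto.
  - intros x Hx; specialize (Hle x Hx); lra.
Qed.

Lemma const_of_deriv_zero (S : R -> Prop) (F : R -> R) a c : a <= c ->
  (forall z, a <= z <= c -> S z) ->
  (forall x, a <= x <= c -> cont_within S F x) ->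
  (forall x, a < x < c -> derivable_pt_lim F x 0) -> F a = F c.
Proof.
  intros Hac HS Hc Hd.
  assert (H1 : F a <= F c) by (apply (mono_within S F (fun _ => 0)); auto; intros; lra).
  assert (H2 : - F a <= - F c).
  { apply (mono_within S (fun x => - F x) (fun _ => 0)); auto; try (intros; lra).
    - intros; apply cw_opp; auto.
    - intros x Hx. apply (dlim_eq _ _ (- 0)); [|ring].
      apply (derivable_pt_lim_opp F). auto. }
  lra.
Qed.

Lemma Rint_RInt f a b : ex_RInt f a b -> Rint f a b = RInt f a b.
Proof.
  intros H. unfold Rint. destruct excluded_middle_informative as [e|n].
  - destruct constructive_indefinite_description as [v [pr Hv]]. simpl.
    rewrite <- Hv. symmetry. apply RInt_Reals.
  - exfalso. apply n. exists (RInt f a b). exists (ex_RInt_Reals_0 _ _ _ H).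
    symmetry; apply RInt_Reals.
Qed.

Lemma ex_RInt_cpt f a b : a <= b -> (forall x, a <= x <= b -> continuity_pt f x) ->
  ex_RInt f a b.
Proof.
  intros Hab H. apply (@ex_RInt_continuous R_CompleteNormedModule). intros z Hz.
  rewrite Rmin_left in Hz by lra. rewrite Rmax_right in Hz by lra.
  apply continuity_pt_filterlim. auto.
Qed.

Lemma clamp_cont (f : R -> R) a b z : a <= b -> a <= z <= b ->
  cont_within (fun x => a <= x <= b) f z ->
  continuity_pt (fun x => f (Rmax a (Rmin x b))) z.
Proof.
  intros Hab Hz H. apply (proj2 (continuity_pt_eps _ z)). intros eps He.
  destruct (H eps He) as [d [Hd H1]].
  exists d; split; auto. intros x Hx.
  assert (E : Rmax a (Rmin z b) = z) by (rewrite Rmin_left, Rmax_right; lra).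
  rewrite E. apply H1.
  - split. apply Rmax_l. apply Rmax_lub. lra. apply Rmin_r.
  - assert (Rabs (Rmax a (Rmin x b) - z) <= Rabs (x - z)).
    { unfold Rmax, Rmin; repeat destruct Rle_dec; unfold Rabs; repeat destruct Rcase_abs; lra. }
    lra.
Qed.

Lemma ex_RInt_within f a b : a <= b ->
  (forall x, a <= x <= b -> cont_within (fun z => a <= z <= b) f x) -> ex_RInt f a b.
Proof.
  intros Hab H.
  apply (@ex_RInt_ext R_NormedModule (fun x => f (Rmax a (Rmin x b))) f a b).
  { intros x Hx. rewrite Rmin_left in Hx by lra. rewrite Rmax_right in Hx by lra.
    rewrite Rmin_left, Rmax_right by lra. auto. }
  apply ex_RInt_cpt; auto. intros; apply clamp_cont; auto.
Qed.

Lemma ftc_within f a y : a < y ->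
  (forall x, a <= x -> cont_within (fun z => a <= z) f x) ->
  derivable_pt_lim (fun z => RInt f a z) y (f y).
Proof.
  intros Hy Hc. apply is_derive_Reals.
  apply (@is_derive_RInt R_NormedModule f (fun z => RInt f a z) a y).
  - assert (Hp : 0 < y - a) by lra. exists (mkposreal _ Hp). intros z Hz.
    unfold ball in Hz; simpl in Hz; unfold AbsRing_ball, abs, minus, plus, opp in Hz; simpl in Hz.
    apply (@RInt_correct R_CompleteNormedModule). apply Rabs_def2 in Hz.
    apply ex_RInt_within; [lra|]. intros x Hx.
    apply cw_sub with (S1 := fun z => a <= z); [intros; lra|]. apply Hc; lra.
  - apply continuity_pt_filterlim. apply (cpt_of_cw (fun z => a <= z) f y (y - a)); [lra| |].
    intros z Hz. apply Rabs_def2 in Hz. lra. apply Hc; lra.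
Qed.

Lemma RInt_abs_le f a b M : a <= b -> ex_RInt f a b ->
  (forall x, a < x < b -> Rabs (f x) <= M) -> Rabs (RInt f a b) <= M * (b - a).
Proof.
  intros Hab He Hb.
  assert (Ec : forall c, RInt (fun _ => c) a b = c * (b - a)).
  { intros c. rewrite RInt_const. unfold scal; simpl. unfold mult; simpl. ring. }
  apply Rabs_le. split.
  - replace (- (M * (b - a))) with (- M * (b - a)) by ring. rewrite <- Ec.
    apply RInt_le; auto. apply ex_RInt_const.
    intros x Hx. specialize (Hb x Hx). apply Rabs_le_between in Hb. lra.
  - rewrite <- Ec. apply RInt_le; auto. apply ex_RInt_const.
    intros x Hx. specialize (Hb x Hx). apply Rabs_le_between in Hb. lra.
Qed.

Lemma RInt_cw f a : (forall x, a <= x -> cont_within (fun z => a <= z) f x) ->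
  forall x, a <= x -> cont_within (fun z => a <= z) (fun z => RInt f a z) x.
Proof.
  intros Hc x Hx. destruct (Rle_lt_or_eq_dec _ _ Hx) as [Hlt|Heq].
  - eapply cw_of_d. apply ftc_within; auto.
  - subst x. intros eps He. destruct (Hc a (Rle_refl a) 1 Rlt_0_1) as [d [Hd H1]].
    set (M := Rabs (f a) + 1). assert (HM : M > 0) by (unfold M; pose proof (Rabs_pos (f a)); lra).
    exists (Rmin d (eps / M)). split. apply Rmin_pos; auto. apply Rdiv_lt_0_compat; lra.
    intros z Hz Hzd. rewrite RInt_point. unfold zero; simpl. rewrite Rminus_0_r.
    assert (Hzd1 : Rabs (z - a) < d) by (eapply Rlt_le_trans; [exact Hzd|apply Rmin_l]).
    assert (Hzd2 : Rabs (z - a) < eps / M) by (eapply Rlt_le_trans; [exact Hzd|apply Rmin_r]).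
    rewrite Rabs_right in Hzd1, Hzd2 by lra.
    eapply Rle_lt_trans. apply (RInt_abs_le f a z M); auto.
    + apply ex_RInt_within; auto. intros y Hy.
      apply cw_sub with (S1 := fun z => a <= z); [intros; lra|]. apply Hc; lra.
    + intros y Hy. assert (Hy2 : Rabs (f y - f a) < 1) by (apply H1; [lra|rewrite Rabs_right; lra]).
      unfold M. apply Rabs_def2 in Hy2. revert Hy2. unfold Rabs. repeat destruct Rcase_abs; lra.
    + apply (Rmult_lt_compat_l M) in Hzd2; auto.
      replace (M * (eps / M)) with eps in Hzd2 by (field; lra). lra.
Qed.

Lemma ftc_pos (f : R -> R) a y : 0 < a -> a < y -> (forall x, 0 < x -> continuity_pt f x) ->
  derivable_pt_lim (fun z => RInt f a z) y (f y).
Proof. intros. apply ftc_within; auto. intros x Hx. apply cw_of_cpt. apply H1. lra. Qed.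

Lemma RInt_cw_pos (f : R -> R) a x : 0 < a -> a <= x -> (forall x, 0 < x -> continuity_pt f x) ->
  cont_within (fun z => a <= z) (fun z => RInt f a z) x.
Proof. intros. apply RInt_cw; auto. intros y Hy. apply cw_of_cpt. apply H1. lra. Qed.

Lemma ex_RInt_pos (f : R -> R) a b : 0 < a -> a <= b -> (forall x, 0 < x -> continuity_pt f x) ->
  ex_RInt f a b.
Proof. intros. apply ex_RInt_cpt; auto. intros; apply H1; lra. Qed.

Lemma RInt_lincomb (f1 f2 : R -> R) c1 c2 a b : ex_RInt f1 a b -> ex_RInt f2 a b ->
  RInt (fun y => c1 * f1 y + c2 * f2 y) a b = c1 * RInt f1 a b + c2 * RInt f2 a b.
Proof.
  intros H1 H2.
  assert (H1' : ex_RInt (fun y => scal c1 (f1 y)) a b) by (apply (@ex_RInt_scal R_NormedModule); auto).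
  assert (H2' : ex_RInt (fun y => scal c2 (f2 y)) a b) by (apply (@ex_RInt_scal R_NormedModule); auto).
  assert (E := @RInt_plus R_CompleteNormedModule _ _ a b H1' H2').
  assert (E1 := @RInt_scal R_CompleteNormedModule f1 a b c1 H1).
  assert (E2 := @RInt_scal R_CompleteNormedModule f2 a b c2 H2).
  simpl in E, E1, E2. unfold plus, scal in *; simpl in *. unfold mult in *; simpl in *.
  rewrite E1, E2 in E. exact E.
Qed.

Lemma cont2_on_2d (S : R -> R -> Prop) F x y d : d > 0 ->
  (forall u v, Rabs (u - x) < d -> Rabs (v - y) < d -> S u v) ->
  cont2_on S F -> continuity_2d_pt F x y.
Proof.
  intros Hd HS HF eps.
  assert (Sxy : S x y) by (apply HS; rewrite Rminus_diag, Rabs_R0; lra).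
  destruct (HF x y Sxy eps (cond_pos eps)) as [d1 [Hd1 H1]].
  assert (Hm : 0 < Rmin d d1) by (apply Rmin_pos; lra).
  exists (mkposreal _ Hm). simpl. intros u v Hu Hv.
  assert (Rmin d d1 <= d) by apply Rmin_l. assert (Rmin d d1 <= d1) by apply Rmin_r.
  apply H1; [apply HS| |]; lra.
Qed.

Lemma has_lim_inf_unique F l1 l2 : has_lim_inf F l1 -> has_lim_inf F l2 -> l1 = l2.
Proof.
  intros H1 H2. destruct (Req_dec l1 l2) as [ok|ne]; auto. exfalso.
  assert (He : Rabs (l1 - l2) / 2 > 0) by (apply Rdiv_lt_0_compat; [apply Rabs_pos_lt; lra|lra]).
  destruct (H1 _ He) as [M1 HM1]. destruct (H2 _ He) as [M2 HM2].
  specialize (HM1 (Rmax M1 M2) (Rle_ge _ _ (Rmax_l _ _))).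
  specialize (HM2 (Rmax M1 M2) (Rle_ge _ _ (Rmax_r _ _))).
  assert (Rabs (l1 - l2) <= Rabs (F (Rmax M1 M2) - l1) + Rabs (F (Rmax M1 M2) - l2)).
  { replace (l1 - l2) with (- (F (Rmax M1 M2) - l1) + (F (Rmax M1 M2) - l2)) by ring.
    eapply Rle_trans. apply Rabs_triang. rewrite Rabs_Ropp. lra. }
  lra.
Qed.

Lemma RintInf_eq f a l : has_lim_inf (fun b => Rint f a b) l -> RintInf f a = l.
Proof.
  intros H. unfold RintInf. destruct excluded_middle_informative as [e|n].
  - destruct constructive_indefinite_description as [v Hv]. simpl.
    eapply has_lim_inf_unique; eauto.
  - exfalso. apply n. exists l; auto.
Qed.

Lemma has_lim_inf_ext F1 F2 l a : (forall b, a <= b -> F1 b = F2 b) ->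
  has_lim_inf F1 l -> has_lim_inf F2 l.
Proof.
  intros He H eps Hp. destruct (H eps Hp) as [M HM]. exists (Rmax M a). intros b Hb.
  rewrite <- He. apply HM. pose proof (Rmax_l M a). lra. pose proof (Rmax_r M a). lra.
Qed.

Lemma has_lim_inf_shift F l c : has_lim_inf F l -> has_lim_inf (fun b => F b - c) (l - c).
Proof.
  intros H eps He. destruct (H eps He) as [M HM]. exists M. intros b Hb.
  replace (F b - c - (l - c)) with (F b - l) by ring. auto.
Qed.

Lemma monotone_has_lim_inf F a M : (forall x y, a <= x <= y -> F x <= F y) ->
  (forall x, a <= x -> F x <= M) ->
  exists l, has_lim_inf F l /\ (forall x, a <= x -> F x <= l).
Proof.
  intros Hi Hb.
  set (E := fun v => exists x, a <= x /\ v = F x).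
  assert (Hbd : bound E) by (exists M; intros v [x [Hx ->]]; auto).
  assert (Hne : exists v, E v) by (exists (F a); exists a; split; [lra|auto]).
  destruct (completeness E Hbd Hne) as [l [Hub Hlub]].
  exists l. split.
  - intros eps He. destruct (Rle_dec l (l - eps / 2)) as [bad|ok]; [lra|].
    assert (exists x, a <= x /\ F x > l - eps).
    { apply Classical_Prop.NNPP. intros Hn. apply ok. apply Hlub. intros v [x [Hx ->]].
      destruct (Rle_dec (F x) (l - eps/2)); auto. exfalso. apply Hn. exists x. split; auto. lra. }
    destruct H as [x0 [Hx0 HF0]]. exists x0. intros b Hb0.
    assert (F x0 <= F b) by (apply Hi; lra).
    assert (F b <= l) by (apply Hub; exists b; split; auto; lra).
    rewrite Rabs_left1; lra.
  - intros x Hx. apply Hub. exists x; auto.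
Qed.

Lemma monotone_le_lim_inf F a l : (forall x y, a <= x <= y -> F x <= F y) ->
  has_lim_inf F l -> forall x, a <= x -> F x <= l.
Proof.
  intros Hi Hl x Hx. destruct (Rle_dec (F x) l) as [ok|nok]; auto. exfalso.
  assert (He : F x - l > 0) by lra. destruct (Hl _ He) as [M HM].
  specialize (HM (Rmax M x) (Rle_ge _ _ (Rmax_l _ _))).
  assert (F x <= F (Rmax M x)) by (apply Hi; split; auto; apply Rmax_r).
  apply Rabs_def2 in HM. lra.
Qed.

Lemma lim_inf_le F l M c : has_lim_inf F l -> (forall b, b >= M -> F b <= c) -> l <= c.
Proof.
  intros Hl Hb. destruct (Rle_dec l c) as [ok|nok]; auto. exfalso.
  assert (He : l - c > 0) by lra. destruct (Hl _ He) as [M1 HM1].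
  specialize (HM1 (Rmax M M1) (Rle_ge _ _ (Rmax_r _ _))).
  specialize (Hb (Rmax M M1) (Rle_ge _ _ (Rmax_l _ _))). apply Rabs_def2 in HM1. lra.
Qed.

Lemma lim_bound (u : nat -> R) l a b N : Un_cv u l ->
  (forall n, (n >= N)%nat -> Rabs (u n - a) <= b) -> Rabs (l - a) <= b.
Proof.
  intros Hu Hb. destruct (Rle_dec (Rabs (l - a)) b) as [ok|nok]; auto. exfalso.
  assert (He : Rabs (l - a) - b > 0) by lra.
  destruct (Hu _ He) as [N1 HN1]. specialize (HN1 (max N N1) (Nat.le_max_r _ _)).
  specialize (Hb (max N N1) (Nat.le_max_l _ _)). unfold R_dist in HN1.
  assert (Rabs (l - a) <= Rabs (u (max N N1) - l) + Rabs (u (max N N1) - a)).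
  { replace (l - a) with (- (u (max N N1) - l) + (u (max N N1) - a)) by ring.
    eapply Rle_trans. apply Rabs_triang. rewrite Rabs_Ropp. lra. }
  lra.
Qed.

Lemma cv_le (u v : nat -> R) a b N : Un_cv u a -> Un_cv v b ->
  (forall n, (n >= N)%nat -> v n <= u n) -> b <= a.
Proof.
  intros Hu Hv H. assert (Hd : Un_cv (fun n => u n - v n) (a - b)) by (apply CV_minus; auto).
  destruct (Rle_dec b a) as [ok|nok]; auto. exfalso.
  destruct (Hd (b - a) ltac:(lra)) as [N1 HN1]. specialize (HN1 (max N N1) (Nat.le_max_r _ _)).
  specialize (H (max N N1) (Nat.le_max_l _ _)). unfold R_dist in HN1.
  apply Rabs_def2 in HN1. lra.
Qed.

Lemma cv_const c : Un_cv (fun _ => c) c.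
Proof. intros eps He. exists 0%nat. intros. unfold R_dist. rewrite Rminus_diag, Rabs_R0. lra. Qed.

Lemma cv_inv (u : nat -> R) l : l <> 0 -> Un_cv u l -> Un_cv (fun n => / u n) (/ l).
Proof.
  intros Hl H. apply is_lim_seq_Reals. apply is_lim_seq_Reals in H.
  assert (Hi := is_lim_seq_inv u l H). simpl in Hi. apply Hi. intros E. inversion E. auto.
Qed.

Lemma mvt_bound (g dg : R -> R) t r s e : r > 0 -> Rabs (s - t) < r ->
  (forall x, Rabs (x - t) < r -> derivable_pt_lim g x (dg x)) ->
  (forall x, Rabs (x - t) < r -> Rabs (dg x) <= e) ->
  Rabs (g s - g t) <= e * Rabs (s - t).
Proof.
  intros Hr Hs Hd Hb.
  assert (Hin : forall x, Rmin t s <= x <= Rmax t s -> Rabs (x - t) < r).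
  { intros x Hx. unfold Rmin, Rmax in Hx. destruct Rle_dec;
    apply Rabs_def2 in Hs; apply Rabs_def1; lra. }
  destruct (MVT_gen g t s dg) as [c [Hc Heq]].
  - intros x Hx. apply is_derive_Reals. apply Hd. apply Hin. lra.
  - intros x Hx. eapply cpt_of_d. apply Hd. apply Hin. lra.
  - replace (g s - g t) with (- (g t - g s)) by ring. rewrite Rabs_Ropp.
    replace (g t - g s) with (- (dg c * (s - t))) by lra. rewrite Rabs_Ropp, Rabs_mult.
    apply Rmult_le_compat_r. apply Rabs_pos. apply Hb. apply Hin; auto.
Qed.

Section LimitDerivative.
Variables (f df : nat -> R -> R) (F : R -> R) (D t r : R).
Hypothesis Hr : r > 0.
Hypothesis Hd : forall n s, Rabs (s - t) < r -> derivable_pt_lim (f n) s (df n s).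
Hypothesis Hcv : forall s, Rabs (s - t) < r -> Un_cv (fun n => f n s) (F s).
Hypothesis Hcau : forall e, e > 0 -> exists N, forall n m s, (n >= N)%nat -> (m >= N)%nat ->
  Rabs (s - t) < r -> Rabs (df n s - df m s) <= e.
Hypothesis HD : Un_cv (fun n => df n t) D.

Lemma increment_close e N : (forall n m s, (n >= N)%nat -> (m >= N)%nat ->
    Rabs (s - t) < r -> Rabs (df n s - df m s) <= e) ->
  forall s, Rabs (s - t) < r -> Rabs ((F s - F t) - (f N s - f N t)) <= e * Rabs (s - t).
Proof.
  intros HN s Hs.
  apply (lim_bound (fun n => f n s - f n t) _ _ _ N).
  - apply CV_minus; apply Hcv; auto. rewrite Rminus_diag, Rabs_R0; lra.
  - intros n Hn.
    replace (f n s - f n t - (f N s - f N t)) with (f n s - f N s - (f n t - f N t)) by ring.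
    apply (mvt_bound (fun x => f n x - f N x) (fun x => df n x - df N x) t r s e Hr Hs).
    + intros x Hx. apply dlim_minus; apply Hd; auto.
    + intros x Hx. apply HN; auto.
Qed.

Lemma derivable_pt_lim_of_limit : derivable_pt_lim F t D.
Proof.
  intros eps Heps.
  set (e := eps / 4). assert (He : e > 0) by (unfold e; lra).
  destruct (Hcau e He) as [N HN].
  assert (Htt : Rabs (t - t) < r) by (rewrite Rminus_diag, Rabs_R0; lra).
  assert (C2 : Rabs (D - df N t) <= e).
  { apply (lim_bound (fun n => df n t) _ _ _ N); auto. }
  destruct (Hd N t Htt e He) as [d1 Hd1].
  assert (Hm : 0 < Rmin d1 r) by (apply Rmin_pos; [apply (cond_pos d1)|lra]).
  exists (mkposreal _ Hm). intros h Hh Hh2. simpl in Hh2.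
  assert (Hh1 : Rabs h < d1) by (eapply Rlt_le_trans; [exact Hh2|apply Rmin_l]).
  assert (Hhr : Rabs (t + h - t) < r).
  { replace (t + h - t) with h by ring. eapply Rlt_le_trans; [exact Hh2|apply Rmin_r]. }
  assert (C1 := increment_close e N HN _ Hhr). specialize (Hd1 h Hh Hh1).
  replace (t + h - t) with h in C1 by ring.
  assert (Hah : Rabs h > 0) by (apply Rabs_pos_lt; auto).
  assert (C1' : Rabs ((F (t + h) - F t) / h - (f N (t + h) - f N t) / h) <= e).
  { replace ((F (t + h) - F t) / h - (f N (t + h) - f N t) / h) with
      (((F (t + h) - F t) - (f N (t + h) - f N t)) / h) by (field; auto).
    unfold Rdiv. rewrite Rabs_mult, Rabs_inv.
    apply (Rmult_le_reg_r (Rabs h)); auto. rewrite Rmult_assoc, Rinv_l by lra. lra. }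
  replace ((F (t + h) - F t) / h - D) with
    (((F (t + h) - F t) / h - (f N (t + h) - f N t) / h) + ((f N (t + h) - f N t) / h - df N t)
     - (D - df N t)) by ring.
  eapply Rle_lt_trans. apply Rabs_triang. rewrite Rabs_Ropp.
  eapply Rle_lt_trans. apply Rplus_le_compat_r. apply Rabs_triang.
  unfold e in *. lra.
Qed.

End LimitDerivative.

Lemma exp_opp_le1 y : 0 <= y -> exp (- y) <= 1.
Proof.
  intros. rewrite <- exp_0. destruct (Req_dec y 0) as [->|]; [rewrite Ropp_0; lra|].
  left; apply exp_increasing; lra.
Qed.

Lemma exp_bd y : 0 <= y -> (1 + y) * exp (- y) <= 1.
Proof.
  intros Hy. rewrite exp_Ropp. pose proof (exp_pos y). pose proof (exp_ineq1_le y).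
  apply (Rmult_le_reg_r (exp y)); auto. rewrite Rmult_assoc, Rinv_l by lra. lra.
Qed.

(* (2 + y) e^{-y} <= 4 / y, from e^{y/2} >= 1 + y/2. *)
Lemma exp_bd2 y : 0 < y -> (2 + y) * exp (- y) <= 4 / y.
Proof.
  intros Hy. rewrite exp_Ropp. pose proof (exp_pos y).
  assert (Hh : 1 + y / 2 <= exp (y / 2)) by (left; apply exp_ineq1; lra).
  assert (E : exp y = exp (y/2) * exp (y/2)) by (rewrite <- exp_plus; f_equal; field).
  assert (Hq : (1 + y/2) * (1 + y/2) <= exp y) by (rewrite E; apply Rmult_le_compat; lra).
  apply (Rmult_le_reg_r (exp y * y)). nra.
  replace ((2 + y) * / exp y * (exp y * y)) with ((2 + y) * y) by (field; lra).
  replace (4 / y * (exp y * y)) with (4 * exp y) by (field; lra). nra.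
Qed.

Lemma abs_mul_le a b a0 b0 : Rabs a <= a0 -> Rabs b <= b0 -> Rabs (a * b) <= a0 * b0.
Proof. intros. rewrite Rabs_mult. apply Rmult_le_compat; auto; apply Rabs_pos. Qed.

Lemma abs_sum6_le a b c d e f0 :
  Rabs (a + b + c + d + e - f0) <= Rabs a + Rabs b + Rabs c + Rabs d + Rabs e + Rabs f0.
Proof.
  unfold Rminus. eapply Rle_trans; [apply Rabs_triang|]. rewrite Rabs_Ropp.
  apply Rplus_le_compat_r. eapply Rle_trans; [apply Rabs_triang|]. apply Rplus_le_compat_r.
  eapply Rle_trans; [apply Rabs_triang|]. apply Rplus_le_compat_r.
  eapply Rle_trans; [apply Rabs_triang|]. apply Rplus_le_compat_r. apply Rabs_triang.
Qed.

Lemma quad_form_nonneg (beta0 a b c e W F : R) : b > 0 -> 0 <= e -> e * c ^ 2 <= beta0 * a * b ->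
  0 <= 2 * beta0 * a * (W * W) + / 2 * e * b * (F * F) + 2 * e * c * F * W.
Proof.
  intros Hb He Hc.
  set (Q := 2 * beta0 * a * (W * W) + / 2 * e * b * (F * F) + 2 * e * c * F * W).
  assert (E : b * Q = 2 * (beta0 * a * b - e * c ^ 2) * (W * W)
                      + / 2 * e * ((b * F + 2 * c * W) * (b * F + 2 * c * W))) by (unfold Q; field).
  assert (0 <= b * Q).
  { rewrite E. pose proof (Rle_0_sqr (b * F + 2 * c * W)). pose proof (Rle_0_sqr W). unfold Rsqr in *.
    assert (0 <= 2 * (beta0 * a * b - e * c ^ 2) * (W * W)) by (apply Rmult_le_pos; lra).
    assert (0 <= / 2 * e * ((b * F + 2 * c * W) * (b * F + 2 * c * W)))
      by (apply Rmult_le_pos; [apply Rmult_le_pos|]; lra).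
    lra. }
  nra.
Qed.

Definition prim0 (f : R -> R) (y : R) : R := RInt f 0 y.

Section Primitive.
Variable f : R -> R.
Hypothesis Hf : forall x, 0 <= x -> cont_within (fun z => 0 <= z) f x.

Lemma prim0_ex a b : 0 <= a <= b -> ex_RInt f a b.
Proof.
  intros Hab. apply ex_RInt_within; [lra|]. intros x Hx.
  apply cw_sub with (S1 := fun z => 0 <= z); [intros; lra|]. apply Hf; lra.
Qed.

Lemma prim0_der y : 0 < y -> derivable_pt_lim (prim0 f) y (f y).
Proof. intros. apply ftc_within; auto. Qed.

Lemma prim0_cw y : 0 <= y -> cont_within (fun z => 0 <= z) (prim0 f) y.
Proof. intros. apply RInt_cw; auto. Qed.

Lemma prim0_0 : prim0 f 0 = 0.
Proof. unfold prim0. rewrite RInt_point. reflexivity. Qed.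

Lemma prim0_chasles a b : 0 <= a <= b -> RInt f a b = prim0 f b - prim0 f a.
Proof.
  intros Hab. unfold prim0.
  assert (E := RInt_Chasles f 0 a b (prim0_ex 0 a ltac:(lra)) (prim0_ex a b Hab)).
  unfold plus in E; simpl in E. lra.
Qed.

Lemma prim0_increment_le (G dG : R -> R) a b : 0 <= a <= b ->
  (forall x, derivable_pt_lim G x (dG x)) -> (forall x, a < x < b -> f x <= dG x) ->
  prim0 f b - prim0 f a <= G b - G a.
Proof.
  intros Hab HG Hle. apply (increment_le (fun z => 0 <= z) (prim0 f) f G dG); auto; try lra.
  - intros; lra.
  - intros; apply prim0_cw; lra.
  - intros; eapply cw_of_d; apply HG.
  - intros; apply prim0_der; lra.
Qed.

Section Nonneg.
Hypothesis Hpos : forall x, 0 < x -> 0 <= f x.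

Lemma prim0_mono x y : 0 <= x <= y -> prim0 f x <= prim0 f y.
Proof.
  intros Hxy. apply (mono_within (fun z => 0 <= z) (prim0 f) f); auto; try (intros; lra).
  - intros; apply prim0_cw; lra.
  - intros; apply prim0_der; lra.
  - intros; apply Hpos; lra.
Qed.

Lemma prim0_nonneg y : 0 <= y -> 0 <= prim0 f y.
Proof. intros. rewrite <- prim0_0. apply prim0_mono; lra. Qed.

Lemma prim0_RintInf M : (forall y, 0 <= y -> prim0 f y <= M) ->
  has_lim_inf (prim0 f) (RintInf f 0) /\ (forall y, 0 <= y -> prim0 f y <= RintInf f 0).
Proof.
  intros HM. destruct (monotone_has_lim_inf (prim0 f) 0 M) as [l [Hl Hle]]; auto.
  - intros; apply prim0_mono; lra.
  - enough (RintInf f 0 = l) as -> by auto.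
    apply RintInf_eq. apply has_lim_inf_ext with (F1 := prim0 f) (a := 0); auto.
    intros b Hb. symmetry. apply Rint_RInt, prim0_ex. lra.
Qed.

Lemma RintInf_tail M y : (forall z, 0 <= z -> prim0 f z <= M) -> 0 <= y ->
  RintInf f y = RintInf f 0 - prim0 f y.
Proof.
  intros HM Hy. apply RintInf_eq.
  apply has_lim_inf_ext with (F1 := fun b => prim0 f b - prim0 f y) (a := y).
  - intros b Hb. rewrite Rint_RInt by (apply prim0_ex; lra). symmetry. apply prim0_chasles. lra.
  - apply has_lim_inf_shift. apply (prim0_RintInf M HM).
Qed.

End Nonneg.
End Primitive.

Lemma dlim_exp_tail M y :
  derivable_pt_lim (fun y => - M * ((2 + y) * exp (- y))) y (M * ((1 + y) * exp (- y))).
Proof.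
  apply (dlim_eq _ _ (0 * ((2 + y) * exp (- y)) + - M * (1 * exp (- y) + (2 + y) * - exp (- y))));
    [|ring].
  apply (dlim_mult (fun _ => - M) (fun y => (2 + y) * exp (- y))). apply dlim_const.
  apply (dlim_mult (fun y => 2 + y) (fun y => exp (- y))).
  apply (dlim_local (fun y => 2 + 1 * y) _ _ _ 1); [lra|intros; ring|apply dlim_lin].
  apply dlim_exp_opp.
Qed.

Lemma exp_tail_decr a c : 0 <= a <= c -> (2 + c) * exp (- c) <= (2 + a) * exp (- a).
Proof.
  intros Hac.
  enough (- 1 * ((2 + a) * exp (- a)) <= - 1 * ((2 + c) * exp (- c))) by lra.
  apply (mono_within (fun _ => True) (fun y => - 1 * ((2 + y) * exp (- y)))
           (fun y => 1 * ((1 + y) * exp (- y)))); try (intros; auto; lra).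
  - intros; eapply cw_of_d; apply dlim_exp_tail.
  - intros; apply dlim_exp_tail.
  - intros y Hy. pose proof (exp_pos (- y)). apply Rmult_le_pos; [lra|]. apply Rmult_le_pos; lra.
Qed.

Lemma RInt_exp_tail (phi : R -> R) M a c : 0 <= M -> 0 < a <= c ->
  (forall y, 0 < y -> continuity_pt phi y) ->
  (forall y, 0 < y -> Rabs (phi y) <= M * ((1 + y) * exp (- y))) ->
  Rabs (RInt phi a c) <= M * ((2 + a) * exp (- a)).
Proof.
  intros HM Hac Hc Hb.
  set (G := fun y => - M * ((2 + y) * exp (- y))).
  assert (HG : forall x, derivable_pt_lim G x (M * ((1 + x) * exp (- x)))) by (intros; apply dlim_exp_tail).
  assert (H1 : RInt phi a c - RInt phi a a <= G c - G a).
  { apply (increment_le (fun z => a <= z) (fun y => RInt phi a y) phi G (fun x => M * ((1 + x) * exp (- x))));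
      try (intros; lra); auto.
    - intros; apply RInt_cw_pos; auto; lra.
    - intros; eapply cw_of_d; apply HG.
    - intros; apply ftc_pos; auto; lra.
    - intros y Hy. specialize (Hb y ltac:(lra)). apply Rabs_le_between in Hb. lra. }
  assert (H2 : - RInt phi a c - - RInt phi a a <= G c - G a).
  { apply (increment_le (fun z => a <= z) (fun y => - RInt phi a y) (fun y => - phi y)
             G (fun x => M * ((1 + x) * exp (- x)))); try (intros; lra); auto.
    - intros; apply cw_opp, RInt_cw_pos; auto; lra.
    - intros; eapply cw_of_d; apply HG.
    - intros. apply (derivable_pt_lim_opp (fun y => RInt phi a y)), ftc_pos; auto; lra.
    - intros y Hy. specialize (Hb y ltac:(lra)). apply Rabs_le_between in Hb. lra. }
  rewrite RInt_point in H1, H2. unfold zero in H1, H2; simpl in H1, H2. unfold G in *.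
  pose proof (exp_pos (- c)).
  assert (0 <= M * ((2 + c) * exp (- c))) by (apply Rmult_le_pos; [lra|]; apply Rmult_le_pos; lra).
  apply Rabs_le. lra.
Qed.

Section Lemma33.

Variables (T : R) (U : R -> R) (Unorm : R) (w wt wy wyy : R -> R -> R) (C : R).
Hypothesis HT : T > 0.
Hypothesis HUneg : forall x, 0 <= x <= T -> U x <= 0.
Hypothesis HUnorm : is_lub (fun v => exists x, 0 <= x <= T /\ v = Rabs (U x)) Unorm.
Hypothesis Hwt : forall t y, 0 < t < T -> 0 < y -> derivable_pt_lim (fun s => w s y) t (wt t y).
Hypothesis Hwy : forall t y, 0 < t < T -> 0 < y -> derivable_pt_lim (w t) y (wy t y).
Hypothesis Hwyy : forall t y, 0 < t < T -> 0 < y -> derivable_pt_lim (wy t) y (wyy t y).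
Hypothesis Hwc : cont2_on (fun t y => 0 < t < T /\ 0 <= y) w.
Hypothesis Hwtc : cont2_on (fun t y => 0 < t < T /\ 0 < y) wt.
Hypothesis Hwpos : forall t y, 0 < t < T -> 0 < y -> w t y >= 0.
Hypothesis Hpde : forall t y, 0 < t < T -> 0 < y ->
      wt t y - (w t y) ^ 2
      + Rint (fun y' => w t y' + U t) 0 y * wy t y
      - 2 * U t * w t y
      - RintInf (w t) y
      - wyy t y = 0.
Hypothesis Hbc0 : forall t, 0 < t < T -> w t 0 = - U t.
Hypothesis HC : forall t y, 0 < t < T -> 0 < y -> (Rabs (w t y) + Rabs (wy t y)) * exp y <= C.

Variables (rho drho : R -> R) (Cf beta K L A M0 B : R) (f df ddf g dg ddg eta deta : R -> R).
Hypothesis HCf : Cf > 0.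
Hypothesis Hbeta : 0 < beta < 1.
Hypothesis Hrho0 : forall y, 0 <= y -> 0 <= rho y.
Hypothesis Hdrho : forall y, 0 <= y -> deriv_within (fun z => 0 <= z) rho (drho y) y.
Hypothesis Hdrhoc : forall y, 0 <= y -> cont_within (fun z => 0 <= z) drho y.
Hypothesis HK : forall y, 0 <= y -> Rabs (rho y) <= K /\ Rabs (drho y) <= K.
Hypothesis HL : forall y z, 0 <= y -> 0 <= z -> Rabs (drho y - drho z) <= L * Rabs (y - z).
Hypothesis HL1 : L1_on_half rho 0.
Hypothesis HA : 0 < A.
Hypothesis HAM : A < M0.
Hypothesis HMB : M0 < B.
Hypothesis Hrf : forall y, 0 <= y <= B -> rho y = f y.
Hypothesis Hrg : forall y, B < y -> rho y = g y.
Hypothesis Hdf : forall y, 0 <= y <= B -> deriv_within (fun z => 0 <= z <= B) f (df y) y.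
Hypothesis Hddf : forall y, 0 <= y <= B -> y <> A ->
  deriv_within (fun z => 0 <= z <= B /\ z <> A) df (ddf y) y.
Hypothesis Hdg : forall y, M0 <= y -> deriv_within (fun z => M0 <= z) g (dg y) y.
Hypothesis Hddg : forall y, M0 <= y -> deriv_within (fun z => M0 <= z) dg (ddg y) y.
Hypothesis Heta : forall x, derivable_pt_lim eta x (deta x).
Hypothesis Heta0 : forall x, x < M0 -> eta x = 0.
Hypothesis Heta1 : forall x, B < x -> eta x = 1.
Hypothesis Hdeta : forall x, 0 <= deta x <= 2 / (B - M0).
Hypothesis Hf0 : f 0 = 0.
Hypothesis Hfpos : forall y, 0 < y <= B -> f y > 0.
Hypothesis HF2 : forall y, 0 <= y <= B -> y * df y <= Cf * f y.
Hypothesis HF3 : forall y, 0 <= y <= B -> y <> A -> Rint f 0 y + ddf y >= 0.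
Hypothesis HF4 : forall y, 0 <= y <= B -> y <> A -> ddf y <= 0.
Hypothesis Hgpos : forall y, M0 < y -> g y > 0.
Hypothesis HG2 : forall y, M0 < y -> dg y < 0 /\ ddg y > 0.
Hypothesis HG3 : forall y, B <= y -> (dg y) ^ 2 / (g y * ddg y) <= beta.
Hypothesis HFG2 : forall y, M0 <= y <= B ->
        eta y * (dg y) ^ 2 / (f y * ddg y) <= beta /\
        2 * deta y * dg y + eta y * ddg y - ddf y >= 0.

Lemma U_bd s : 0 < s < T -> Rabs (U s) <= Unorm.
Proof. intros Hs. destruct HUnorm as [Hub _]. apply Hub. exists s. split; auto; lra. Qed.

Lemma Unorm_ge0 : 0 <= Unorm.
Proof. eapply Rle_trans; [apply (Rabs_pos (U (T / 2)))|]. apply U_bd; lra. Qed.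

Lemma U_le0 s : 0 < s < T -> U s <= 0.
Proof. intros; apply HUneg; lra. Qed.

Lemma U_ge s : 0 < s < T -> - Unorm <= U s.
Proof. intros Hs. pose proof (U_bd s Hs) as H. apply Rabs_le_between in H. lra. Qed.

Lemma C_ge0 : 0 <= C.
Proof.
  assert (H := HC (T/2) 1 ltac:(lra) ltac:(lra)). pose proof (Rabs_pos (w (T/2) 1)).
  pose proof (Rabs_pos (wy (T/2) 1)). pose proof (exp_pos 1). nra.
Qed.

Lemma w_decay s y : 0 < s < T -> 0 < y ->
  Rabs (w s y) <= C * exp (- y) /\ Rabs (wy s y) <= C * exp (- y).
Proof.
  intros Hs Hy. specialize (HC s y Hs Hy).
  pose proof (Rabs_pos (w s y)). pose proof (Rabs_pos (wy s y)).
  rewrite exp_Ropp. pose proof (exp_pos y).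
  split; apply (Rmult_le_reg_r (exp y)); auto; rewrite Rmult_assoc, Rinv_l by lra; nra.
Qed.

Lemma w_bounded s y : 0 < s < T -> 0 < y -> Rabs (w s y) <= C /\ Rabs (wy s y) <= C.
Proof.
  intros Hs Hy. destruct (w_decay s y Hs Hy). pose proof (exp_opp_le1 y ltac:(lra)).
  pose proof C_ge0. pose proof (exp_pos (-y)). split; nra.
Qed.

(* w >= 0 on [0,oo), including the boundary where w = -U >= 0. *)
Lemma w_nonneg s y : 0 < s < T -> 0 <= y -> 0 <= w s y.
Proof.
  intros Hs Hy. destruct (Req_dec y 0) as [->|Hn].
  - rewrite Hbc0; auto. pose proof (U_le0 s Hs); lra.
  - pose proof (Hwpos s y Hs ltac:(lra)); lra.
Qed.

Lemma w_cw s y : 0 < s < T -> 0 <= y -> cont_within (fun z => 0 <= z) (w s) y.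
Proof.
  intros Hs Hy eps He. destruct (Hwc s y (conj Hs Hy) eps He) as [d [Hd H1]].
  exists d; split; auto. intros z Hz Hzd. apply H1; auto. rewrite Rminus_diag, Rabs_R0; lra.
Qed.

Lemma w_cpt s y : 0 < s < T -> 0 < y -> continuity_pt (w s) y.
Proof. intros. eapply cpt_of_d. apply Hwy; auto. Qed.

Lemma wy_cpt s y : 0 < s < T -> 0 < y -> continuity_pt (wy s) y.
Proof. intros. eapply cpt_of_d. apply Hwyy; auto. Qed.

Definition W s y := prim0 (w s) y.
Definition Wtot s := RintInf (w s) 0.

Lemma W_der s y : 0 < s < T -> 0 < y -> derivable_pt_lim (W s) y (w s y).
Proof. intros. apply prim0_der; auto. intros; apply w_cw; auto. Qed.

Lemma W_cpt s y : 0 < s < T -> 0 < y -> continuity_pt (W s) y.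
Proof. intros; eapply cpt_of_d; apply W_der; auto. Qed.

Lemma W_nonneg s y : 0 < s < T -> 0 <= y -> 0 <= W s y.
Proof.
  intros. apply prim0_nonneg; auto. intros; apply w_cw; auto. intros; apply w_nonneg; auto; lra.
Qed.

Lemma W_increment s x y : 0 < s < T -> 0 <= x <= y -> W s y - W s x <= C * (exp (- x) - exp (- y)).
Proof.
  intros Hs Hxy.
  enough (W s y - W s x <= (- C) * exp (- y) - (- C) * exp (- x)) by lra.
  apply (prim0_increment_le (w s) (fun z => w_cw s z Hs)
           (fun z => - C * exp (- z)) (fun z => - C * - exp (- z))); auto.
  - intros z. apply (dlim_eq _ _ (0 * exp (- z) + - C * - exp (- z))); [|ring].
    apply (dlim_mult (fun _ => - C) (fun y => exp (- y))). apply dlim_const. apply dlim_exp_opp.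
  - intros z Hz. destruct (w_decay s z Hs ltac:(lra)) as [Hw _].
    apply Rabs_le_between in Hw. lra.
Qed.

Lemma W_le_lin s y : 0 < s < T -> 0 <= y -> W s y <= C * y.
Proof.
  intros Hs Hy.
  assert (H := prim0_increment_le (w s) (fun z => w_cw s z Hs) (fun z => 0 + C * z) (fun _ => C) 0 y).
  unfold W. rewrite prim0_0 in H. enough (prim0 (w s) y - 0 <= 0 + C * y - (0 + C * 0)) by lra.
  apply H; try lra.
  - intros; apply dlim_lin.
  - intros z Hz. destruct (w_bounded s z Hs ltac:(lra)) as [Hw _].
    apply Rabs_le_between in Hw. lra.
Qed.

Lemma W_le_C s y : 0 < s < T -> 0 <= y -> W s y <= C.
Proof.
  intros Hs Hy. pose proof (W_increment s 0 y Hs ltac:(lra)) as H.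
  unfold W in H at 2. rewrite prim0_0, Ropp_0, exp_0 in H.
  pose proof (exp_pos (- y)). pose proof C_ge0. nra.
Qed.

Lemma W_lim s : 0 < s < T -> has_lim_inf (W s) (Wtot s) /\ (forall y, 0 <= y -> W s y <= Wtot s).
Proof.
  intros Hs. apply (prim0_RintInf (w s)) with (M := C).
  - intros; apply w_cw; auto.
  - intros; apply w_nonneg; auto; lra.
  - intros; apply W_le_C; auto.
Qed.

Lemma W_tail s y : 0 < s < T -> 0 <= y -> RintInf (w s) y = Wtot s - W s y.
Proof.
  intros Hs Hy. apply (RintInf_tail (w s)) with (M := C); auto.
  - intros; apply w_cw; auto.
  - intros; apply w_nonneg; auto; lra.
  - intros; apply W_le_C; auto.
Qed.

Lemma W_tail_bd s y : 0 < s < T -> 0 <= y -> 0 <= Wtot s - W s y <= C * exp (- y).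
Proof.
  intros Hs Hy. destruct (W_lim s Hs) as [Hl Hle]. split.
  - specialize (Hle y Hy). lra.
  - apply (lim_inf_le (fun b => W s b - W s y) _ y). apply has_lim_inf_shift; auto.
    intros b Hb. pose proof (W_increment s y b Hs ltac:(lra)).
    pose proof (exp_pos (-b)). pose proof C_ge0. nra.
Qed.

Lemma Rint_w_plus_U s y : 0 < s < T -> 0 <= y ->
  Rint (fun y' => w s y' + U s) 0 y = W s y + U s * y.
Proof.
  intros Hs Hy.
  assert (H1 : ex_RInt (w s) 0 y) by (apply prim0_ex; [intros; apply w_cw; auto|lra]).
  assert (H2 : ex_RInt (fun _ => U s) 0 y) by apply ex_RInt_const.
  rewrite Rint_RInt by (apply (ex_RInt_plus (w s) (fun _ => U s)); auto).
  assert (E := RInt_plus (w s) (fun _ => U s) 0 y H1 H2). rewrite RInt_const in E.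
  unfold plus, scal in E; simpl in E; unfold mult in E; simpl in E.
  unfold W, prim0. rewrite E. ring.
Qed.

Lemma rho_cw y : 0 <= y -> cont_within (fun z => 0 <= z) rho y.
Proof. intros. apply (cw_of_dw _ _ (drho y)); auto. Qed.

Lemma rho_0 : rho 0 = 0.
Proof. rewrite Hrf; auto; lra. Qed.

Lemma rho_der y : 0 < y -> derivable_pt_lim rho y (drho y).
Proof.
  intros. apply (dpt_of_dw (fun z => 0 <= z) rho (drho y) y y); auto.
  - intros z Hz; apply Rabs_def2 in Hz; lra.
  - apply Hdrho; lra.
Qed.

Lemma rho_cpt y : 0 < y -> continuity_pt rho y.
Proof. intros. eapply cpt_of_d; apply rho_der; auto. Qed.

Lemma drho_cpt y : 0 < y -> continuity_pt drho y.
Proof.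
  intros. apply (cpt_of_cw (fun z => 0 <= z) drho y y); auto.
  - intros z Hz; apply Rabs_def2 in Hz; lra.
  - apply Hdrhoc; lra.
Qed.

Lemma K_ge0 : 0 <= K.
Proof. destruct (HK 0 ltac:(lra)). pose proof (Rabs_pos (rho 0)); lra. Qed.

Lemma L_ge0 : 0 <= L.
Proof.
  pose proof (HL 1 0 ltac:(lra) ltac:(lra)) as H. rewrite Rminus_0_r, Rabs_R1 in H.
  pose proof (Rabs_pos (drho 1 - drho 0)). lra.
Qed.

(* rho(0) = 0 and |rho'| <= K. *)
Lemma rho_le_lin y : 0 <= y -> rho y <= K * y.
Proof.
  intros Hy. enough (rho y - rho 0 <= (0 + K * y) - (0 + K * 0)) by (rewrite rho_0 in *; lra).
  apply (increment_le (fun z => 0 <= z) rho drho (fun z => 0 + K * z) (fun _ => K)); try lra.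
  - intros; lra.
  - intros; apply rho_cw; lra.
  - intros; eapply cw_of_d; apply dlim_lin.
  - intros; apply rho_der; lra.
  - intros; apply dlim_lin.
  - intros z Hz. destruct (HK z ltac:(lra)) as [_ H]. apply Rabs_le_between in H. lra.
Qed.

(* rho >= 0 with rho(0) = 0 forces rho'(0) >= 0. *)
Lemma drho_0 : 0 <= drho 0.
Proof.
  destruct (Rle_dec 0 (drho 0)) as [ok|nok]; auto. exfalso.
  destruct (Hdrho 0 (Rle_refl 0) (- drho 0) ltac:(lra)) as [d [Hd H1]].
  specialize (H1 (d/2) ltac:(lra) ltac:(lra) ltac:(rewrite Rabs_right; lra)).
  rewrite Rplus_0_l, rho_0, Rminus_0_r in H1. apply Rabs_def2 in H1.
  assert (0 <= rho (d/2) / (d/2)) by (apply Rdiv_le_0_compat; [apply Hrho0; lra|lra]). lra.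
Qed.

Lemma drho_df y : 0 < y < B -> drho y = df y.
Proof.
  intros Hy. set (d := Rmin y (B - y)). assert (Hd : d > 0) by (unfold d; apply Rmin_pos; lra).
  assert (Hin : forall z, Rabs (z - y) < d -> 0 <= z <= B).
  { intros z Hz. apply Rabs_def2 in Hz.
    assert (d <= y) by apply Rmin_l. assert (d <= B - y) by apply Rmin_r. lra. }
  apply (uniqueness_limite rho y); [apply rho_der; lra|].
  apply (dlim_local f rho y (df y) d Hd). intros z Hz. symmetry. apply Hrf. auto.
  apply (dpt_of_dw _ _ _ _ d Hd Hin). apply Hdf. lra.
Qed.

Lemma dg_der y : M0 < y -> derivable_pt_lim dg y (ddg y).
Proof.
  intros Hy. apply (dpt_of_dw (fun z => M0 <= z) _ _ _ (y - M0)); [lra| |apply Hddg; lra].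
  intros z Hz. apply Rabs_def2 in Hz. lra.
Qed.

Lemma drho_dg y : B < y -> drho y = dg y.
Proof.
  intros Hy. apply (uniqueness_limite rho y); [apply rho_der; lra|].
  apply (dlim_local g rho y (dg y) (y - B)); [lra| |].
  - intros z Hz. apply Rabs_def2 in Hz. symmetry. apply Hrg. lra.
  - apply (dpt_of_dw (fun z => M0 <= z) _ _ _ (y - B)); [lra| |apply Hdg; lra].
    intros z Hz. apply Rabs_def2 in Hz. lra.
Qed.

Lemma drho_d2f y : 0 < y < B -> y <> A -> derivable_pt_lim drho y (ddf y).
Proof.
  intros Hy HyA. set (d := Rmin (Rmin y (B - y)) (Rabs (y - A))).
  assert (Hd : d > 0) by (unfold d; repeat apply Rmin_pos; try lra; apply Rabs_pos_lt; lra).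
  assert (Hin : forall z, Rabs (z - y) < d -> 0 < z < B /\ z <> A).
  { intros z Hz. assert (d <= Rmin y (B - y)) by apply Rmin_l.
    assert (Rmin y (B - y) <= y) by apply Rmin_l. assert (Rmin y (B - y) <= B - y) by apply Rmin_r.
    assert (d <= Rabs (y - A)) by apply Rmin_r.
    split. apply Rabs_def2 in Hz. lra. intros ->. rewrite Rabs_minus_sym in Hz. lra. }
  apply (dlim_local df drho y (ddf y) d Hd).
  - intros z Hz. symmetry. apply drho_df. apply Hin; auto.
  - apply (dpt_of_dw (fun z => 0 <= z <= B /\ z <> A) _ _ _ d Hd); [|apply Hddf; lra].
    intros z Hz. destruct (Hin z Hz); split; [lra|auto].
Qed.

Lemma drho_d2g y : B < y -> derivable_pt_lim drho y (ddg y).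
Proof.
  intros Hy. apply (dlim_local dg drho y (ddg y) (y - B)); [lra| |apply dg_der; lra].
  intros z Hz. apply Rabs_def2 in Hz. symmetry. apply drho_dg. lra.
Qed.

(* Properties of the cut-off: continuous, eta(M0) = 0, constant on (B,oo),
   and nonnegative since it is nondecreasing from M0. *)
Lemma eta_cpt y : continuity_pt eta y.
Proof. eapply cpt_of_d; apply Heta. Qed.

Lemma eta_M0 : eta M0 = 0.
Proof.
  destruct (Req_dec (eta M0) 0) as [ok|ne]; auto. exfalso.
  destruct (proj1 (continuity_pt_eps eta M0) (eta_cpt M0) (Rabs (eta M0)) ltac:(apply Rabs_pos_lt; auto))
    as [d [Hd H1]].
  specialize (H1 (M0 - d/2) ltac:(rewrite Rabs_left; lra)).
  rewrite Heta0 in H1 by lra. rewrite Rminus_0_l, Rabs_Ropp in H1. lra.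
Qed.

Lemma deta_right x : B < x -> deta x = 0.
Proof.
  intros Hx. apply (uniqueness_limite eta x); auto.
  apply (dlim_local (fun _ => 1) eta x 0 (x - B)); [lra| |apply dlim_const].
  intros z Hz. apply Rabs_def2 in Hz. rewrite Heta1; lra.
Qed.

Lemma eta_nonneg x : 0 <= eta x.
Proof.
  destruct (Rle_dec M0 x) as [Hx|Hx]; [|rewrite Heta0; lra].
  rewrite <- eta_M0. apply (mono_within (fun _ => True) eta deta M0 x); auto.
  - intros z Hz. apply cw_of_cpt, eta_cpt.
  - intros; apply Hdeta.
Qed.

Definition Rho y := prim0 rho y.
Definition rhoL1 := RintInf (fun y => Rabs (rho y)) 0.

Lemma Rho_der y : 0 < y -> derivable_pt_lim Rho y (rho y).
Proof. intros. apply prim0_der; auto. intros; apply rho_cw; auto. Qed.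

Lemma Rho_mono x y : 0 <= x <= y -> Rho x <= Rho y.
Proof. intros. apply prim0_mono; auto. intros; apply rho_cw; auto. intros; apply Hrho0; lra. Qed.

Lemma Rho_nonneg y : 0 <= y -> 0 <= Rho y.
Proof. intros. apply prim0_nonneg; auto. intros; apply rho_cw; auto. intros; apply Hrho0; lra. Qed.

Lemma Rho_le_lin y : 0 <= y -> Rho y <= K * y.
Proof.
  intros Hy.
  assert (H := prim0_increment_le rho rho_cw (fun z => 0 + K * z) (fun _ => K) 0 y).
  unfold Rho. rewrite prim0_0 in H. enough (prim0 rho y - 0 <= 0 + K * y - (0 + K * 0)) by lra.
  apply H; try lra.
  - intros; apply dlim_lin.
  - intros z Hz. destruct (HK z ltac:(lra)) as [H2 _]. apply Rabs_le_between in H2. lra.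
Qed.

Lemma Rint_f_Rho y : 0 <= y <= B -> Rint f 0 y = Rho y.
Proof.
  intros Hy. assert (E : forall x, Rmin 0 y < x < Rmax 0 y -> rho x = f x).
  { intros x Hx. rewrite Rmin_left in Hx by lra. rewrite Rmax_right in Hx by lra. apply Hrf; lra. }
  assert (Hex : ex_RInt rho 0 y) by (apply prim0_ex; [apply rho_cw|lra]).
  rewrite Rint_RInt by (apply (ex_RInt_ext rho f); auto).
  unfold Rho, prim0. symmetry. apply RInt_ext; auto.
Qed.

(* rho = f > 0 near B, hence int_0^B rho > 0. *)
Lemma Rho_B_pos : Rho B > 0.
Proof.
  assert (HfB : rho B > 0) by (rewrite Hrf by lra; apply Hfpos; lra).
  destruct (proj1 (continuity_pt_eps rho B) (rho_cpt B ltac:(lra)) (rho B / 2) ltac:(lra))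
    as [d [Hd H1]].
  set (d' := Rmin (d / 2) (B / 2)). assert (Hd' : 0 < d') by (unfold d'; apply Rmin_pos; lra).
  assert (d' <= d / 2) by apply Rmin_l. assert (d' <= B / 2) by apply Rmin_r.
  assert (Hinc : (0 + rho B / 2 * B) - (0 + rho B / 2 * (B - d')) <= Rho B - Rho (B - d')).
  { apply (increment_le (fun z => 0 <= z) (fun z => 0 + rho B / 2 * z) (fun _ => rho B / 2) Rho rho);
      try lra.
    - intros; lra.
    - intros; eapply cw_of_d; apply dlim_lin.
    - intros; apply prim0_cw; [apply rho_cw|lra].
    - intros; apply dlim_lin.
    - intros; apply Rho_der; lra.
    - intros z Hz. assert (Hz' : Rabs (rho z - rho B) < rho B / 2) by (apply H1; apply Rabs_def1; lra).
      apply Rabs_def2 in Hz'. lra. }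
  pose proof (Rho_nonneg (B - d') ltac:(lra)). nra.
Qed.

Lemma rhoL1_lim : has_lim_inf Rho rhoL1 /\ rhoL1 > 0.
Proof.
  destruct HL1 as [_ [l Hl]].
  assert (HP : has_lim_inf Rho l).
  { apply has_lim_inf_ext with (F1 := fun b => Rint (fun y => Rabs (rho y)) 0 b) (a := 0); auto.
    intros b Hb. assert (E : forall x, Rmin 0 b < x < Rmax 0 b -> rho x = Rabs (rho x)).
    { intros x Hx. rewrite Rmin_left in Hx by lra. rewrite Rmax_right in Hx by lra.
      rewrite Rabs_right; auto. apply Rle_ge, Hrho0; lra. }
    assert (Hex : ex_RInt rho 0 b) by (apply prim0_ex; [apply rho_cw|lra]).
    rewrite Rint_RInt by (apply (ex_RInt_ext rho); auto).
    unfold Rho, prim0. symmetry. apply RInt_ext; auto. }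
  assert (rhoL1 = l) as -> by (apply RintInf_eq; auto).
  split; auto.
  pose proof (monotone_le_lim_inf Rho 0 l ltac:(intros; apply Rho_mono; lra) HP B ltac:(lra)).
  pose proof Rho_B_pos. lra.
Qed.

Definition Gpart s b := prim0 (fun y => rho y * w s y) b.
Definition Gmass s := RintInf (fun y => rho y * w s y) 0.

Lemma rho_w_cw s y : 0 < s < T -> 0 <= y ->
  cont_within (fun z => 0 <= z) (fun y => rho y * w s y) y.
Proof. intros. apply cw_mult. apply rho_cw; auto. apply w_cw; auto. Qed.

Lemma rho_w_nonneg s y : 0 < s < T -> 0 <= y -> 0 <= rho y * w s y.
Proof. intros. apply Rmult_le_pos. apply Hrho0; lra. apply w_nonneg; auto. Qed.

(* The partial masses are bounded by K C (using rho <= K and w <= C e^{-y}). *)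
Lemma Gpart_le s y : 0 < s < T -> 0 <= y -> Gpart s y <= K * C.
Proof.
  intros Hs Hy.
  assert (H := prim0_increment_le _ (fun z => rho_w_cw s z Hs)
                 (fun z => - (K * C) * exp (- z)) (fun z => - (K * C) * - exp (- z)) 0 y).
  unfold Gpart. rewrite prim0_0, Ropp_0, exp_0 in H.
  enough (prim0 (fun y => rho y * w s y) y - 0 <= - (K * C) * exp (- y) - - (K * C) * 1).
  { assert (0 <= K * C * exp (- y))
      by (pose proof (exp_pos (- y)); pose proof C_ge0; pose proof K_ge0; repeat apply Rmult_le_pos; lra).
    lra. }
  apply H; try lra.
  - intros z. apply (dlim_eq _ _ (0 * exp (- z) + - (K * C) * - exp (- z))); [|ring].
    apply (dlim_mult (fun _ => - (K * C)) (fun y => exp (- y))). apply dlim_const. apply dlim_exp_opp.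
  - intros z Hz. destruct (w_decay s z Hs ltac:(lra)) as [Hw _]. apply Rabs_le_between in Hw.
    destruct (HK z ltac:(lra)) as [H2 _]. apply Rabs_le_between in H2.
    pose proof (Hrho0 z ltac:(lra)). pose proof (w_nonneg s z Hs ltac:(lra)). nra.
Qed.

Lemma Gmass_lim s : 0 < s < T -> has_lim_inf (Gpart s) (Gmass s).
Proof.
  intros Hs. apply (prim0_RintInf _ (fun z => rho_w_cw s z Hs)) with (M := K * C).
  - intros; apply rho_w_nonneg; auto; lra.
  - intros; apply Gpart_le; auto.
Qed.

Lemma wt_cont2 s y : 0 < s < T -> 0 < y -> continuity_2d_pt wt s y.
Proof.
  intros Hs Hy.
  apply (cont2_on_2d (fun t y => 0 < t < T /\ 0 < y) wt s y (Rmin y (Rmin s (T - s))));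
    [|intros u v Hu Hv|exact Hwtc].
  - repeat apply Rmin_pos; lra.
  - assert (Rmin y (Rmin s (T - s)) <= y) by apply Rmin_l.
    assert (Rmin y (Rmin s (T - s)) <= Rmin s (T - s)) by apply Rmin_r.
    assert (Rmin s (T - s) <= s) by apply Rmin_l. assert (Rmin s (T - s) <= T - s) by apply Rmin_r.
    apply Rabs_def2 in Hu. apply Rabs_def2 in Hv. split; lra.
Qed.

Lemma rho_wt_cpt s y : 0 < s < T -> 0 < y -> continuity_pt (fun y => rho y * wt s y) y.
Proof.
  intros Hs Hy. apply cpt_mult. apply rho_cpt; auto.
  apply (proj2 (continuity_pt_eps _ _)). intros eps He.
  destruct (wt_cont2 s y Hs Hy (mkposreal _ He)) as [d Hd].
  exists d. split; [apply cond_pos|]. intros z Hz. apply Hd; auto.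
  rewrite Rminus_diag, Rabs_R0. apply cond_pos.
Qed.

Lemma Gpart_interval_der s e b : 0 < s < T -> 0 < e <= b ->
  derivable_pt_lim (fun u => RInt (fun y => rho y * w u y) e b) s
    (RInt (fun y => rho y * wt s y) e b).
Proof.
  intros Hs Heb.
  set (r := Rmin s (T - s)). assert (Hr : 0 < r) by (unfold r; apply Rmin_pos; lra).
  assert (Hin : forall u, Rabs (u - s) < r -> 0 < u < T).
  { intros u Hu. apply Rabs_def2 in Hu.
    assert (r <= s) by apply Rmin_l. assert (r <= T - s) by apply Rmin_r. lra. }
  assert (Hder : forall u v, 0 < u < T -> 0 < v ->
                   derivable_pt_lim (fun z => rho v * w z v) u (rho v * wt u v)).
  { intros u v Hu Hv. apply (dlim_eq _ _ (0 * w u v + rho v * wt u v)); [|ring].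
    apply (dlim_mult (fun _ => rho v) (fun z => w z v)). apply dlim_const. apply Hwt; auto. }
  assert (HD : forall u v, 0 < u < T -> 0 < v -> Derive (fun z => rho v * w z v) u = rho v * wt u v).
  { intros u v Hu Hv. apply is_derive_unique, is_derive_Reals, Hder; auto. }
  apply is_derive_Reals.
  replace (RInt (fun y => rho y * wt s y) e b)
    with (RInt (fun t => Derive (fun u => rho t * w u t) s) e b).
  2:{ apply RInt_ext. intros x Hx. rewrite Rmin_left, Rmax_right in Hx by lra. apply HD; lra. }
  apply (is_derive_RInt_param (fun u y => rho y * w u y) e b s).
  - exists (mkposreal _ Hr). intros u Hu t Ht.
    rewrite Rmin_left, Rmax_right in Ht by lra.
    exists (rho t * wt u t). apply is_derive_Reals, Hder; [apply Hin; exact Hu|lra].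
  - intros t Ht. rewrite Rmin_left, Rmax_right in Ht by lra.
    apply (continuity_2d_pt_ext_loc (fun u v => rho v * wt u v)).
    + exists (mkposreal _ (Rmin_pos _ _ Hr (Rlt_gt _ _ (ltac:(lra) : 0 < t / 2)))). simpl.
      intros u v Hu Hv. assert (Rmin r (t / 2) <= r) by apply Rmin_l.
      assert (Rmin r (t / 2) <= t / 2) by apply Rmin_r. apply Rabs_def2 in Hv.
      symmetry. apply HD; [apply Hin|]; lra.
    + apply continuity_2d_pt_mult.
      * apply (continuity_1d_2d_pt_comp rho (fun _ v => v)).
        apply rho_cpt; lra. apply continuity_2d_pt_id2.
      * apply wt_cont2; lra.
  - exists (mkposreal _ Hr). intros u Hu.
    apply ex_RInt_pos; try lra. intros x Hx. apply cpt_mult; [apply rho_cpt|apply w_cpt]; auto.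
Qed.

(** ** Integration by parts in y *)

(* By the equation, rho d_t w = ibp_density + d_y flux on (0,oo). *)
Definition ibp_density s y :=
  2 * rho y * (w s y * w s y) + 3 * U s * rho y * w s y + U s * y * drho y * w s y
  + drho y * W s y * w s y + rho y * (Wtot s - W s y) - drho y * wy s y.

Definition flux s y := rho y * wy s y - rho y * (W s y + U s * y) * w s y.

Lemma ibp_density_cpt s y : 0 < s < T -> 0 < y -> continuity_pt (ibp_density s) y.
Proof.
  intros Hs Hy. unfold ibp_density. cpt_split.
  all: first [apply rho_cpt | apply drho_cpt | apply w_cpt | apply wy_cpt | apply W_cpt]; auto.
Qed.

Lemma flux_der s y : 0 < s < T -> 0 < y -> derivable_pt_lim (flux s) y
  (drho y * wy s y + rho y * wyy s y
   - ((drho y * (W s y + U s * y) + rho y * (w s y + U s)) * w s y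
      + rho y * (W s y + U s * y) * wy s y)).
Proof.
  intros Hs Hy. unfold flux.
  apply (dlim_eq _ _ ((drho y * wy s y + rho y * wyy s y)
     - ((drho y * (W s y + U s * y) + rho y * (w s y + (0 * y + U s * 1))) * w s y
        + rho y * (W s y + U s * y) * wy s y))); [|ring].
  apply (dlim_minus (fun y => rho y * wy s y) (fun y => rho y * (W s y + U s * y) * w s y)).
  - apply (dlim_mult rho (wy s)). apply rho_der; auto. apply Hwyy; auto.
  - apply (dlim_mult (fun y => rho y * (W s y + U s * y)) (w s)); [|apply Hwy; auto].
    apply (dlim_mult rho (fun y => W s y + U s * y)). apply rho_der; auto.
    apply (dlim_plus (W s) (fun y => U s * y)). apply W_der; auto.
    apply (dlim_mult (fun _ => U s) (fun y => y)). apply dlim_const. apply dlim_id.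
Qed.

(* int_a^c rho d_t w = int_a^c ibp_density + flux c - flux a: the difference has
   zero derivative by the equation. *)
Lemma ibp_identity s a c : 0 < s < T -> 0 < a <= c ->
  RInt (fun y => rho y * wt s y) a c = RInt (ibp_density s) a c + flux s c - flux s a.
Proof.
  intros Hs Hac.
  set (F := fun y => RInt (fun y => rho y * wt s y) a y - RInt (ibp_density s) a y - flux s y).
  assert (H : F a = F c).
  { apply (const_of_deriv_zero (fun z => a <= z)); try (intros; lra); unfold F.
    - intros y Hy. apply cw_minus; [apply cw_minus|].
      + apply RInt_cw_pos; try lra. intros; apply rho_wt_cpt; auto.
      + apply RInt_cw_pos; try lra. intros; apply ibp_density_cpt; auto.
      + eapply cw_of_d. apply flux_der; auto; lra.
    - intros y Hy. eapply dlim_eq.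
      + apply dlim_minus; [apply dlim_minus|].
        * apply ftc_pos; try lra. intros; apply rho_wt_cpt; auto.
        * apply ftc_pos; try lra. intros; apply ibp_density_cpt; auto.
        * apply flux_der; auto; lra.
      + assert (Hp := Hpde s y Hs ltac:(lra)).
        rewrite Rint_w_plus_U, W_tail in Hp by (auto; lra). simpl in Hp.
        unfold ibp_density.
        replace (wt s y) with ((w s y) * (w s y * 1) - (W s y + U s * y) * wy s y + 2 * U s * w s y
           + (Wtot s - W s y) + wyy s y) by lra. ring. }
  unfold F in H. rewrite !RInt_point in H. unfold zero in H; simpl in H. lra.
Qed.

(** ** The correction functional Omega and the pointwise dissipation inequality *)

(* The cut-off slope eta g': zero on (0,M0) and equal to rho' on (B,oo). *)
Definition slope y := eta y * dg y.

(* Omega' is dominated by ibp_density - target (Lemma [dissipation] below). *)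
Definition Omega s y :=
  / 2 * (drho y - 2 * slope y) * (W s y * W s y) + Rho y * (Wtot s - W s y) - drho y * w s y.

Definition target s y :=
  2 * (1 - beta) * rho y * (w s y * w s y) + (3 + Cf) * U s * rho y * w s y.

(* Omega' when rho'' = d2 and slope' = dm at y. *)
Definition Omega_deriv s y d2 dm :=
  / 2 * (d2 - 2 * dm) * (W s y * W s y) + / 2 * (drho y - 2 * slope y) * (w s y * W s y + W s y * w s y)
  + (rho y * (Wtot s - W s y) + Rho y * (0 - w s y)) - (d2 * w s y + drho y * wy s y).

(* ibp_density - target - Omega', as a sum of terms with controlled signs. *)
Definition gap s y d2 dm :=
  2 * beta * rho y * (w s y * w s y) + U s * (y * drho y - Cf * rho y) * w s y
  + / 2 * (2 * dm - d2) * (W s y * W s y) + 2 * slope y * W s y * w s y + (Rho y + d2) * w s y.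

Lemma gap_eq s y d2 dm :
  ibp_density s y - target s y - Omega_deriv s y d2 dm = gap s y d2 dm.
Proof. unfold ibp_density, target, Omega_deriv, gap. field. Qed.

Lemma Omega_der s y d2 dm : 0 < s < T -> 0 < y ->
  derivable_pt_lim drho y d2 -> derivable_pt_lim slope y dm ->
  derivable_pt_lim (Omega s) y (Omega_deriv s y d2 dm).
Proof.
  intros Hs Hy H2 Hm. unfold Omega, Omega_deriv.
  apply (dlim_eq _ _ ((0 * (drho y - 2 * slope y) + / 2 * (d2 - (0 * slope y + 2 * dm))) * (W s y * W s y)
     + / 2 * (drho y - 2 * slope y) * (w s y * W s y + W s y * w s y)
     + (rho y * (Wtot s - W s y) + Rho y * (0 - w s y)) - (d2 * w s y + drho y * wy s y))); [|ring].
  apply (dlim_minus (fun y => / 2 * (drho y - 2 * slope y) * (W s y * W s y) + Rho y * (Wtot s - W s y))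
                    (fun y => drho y * w s y)).
  - apply (dlim_plus (fun y => / 2 * (drho y - 2 * slope y) * (W s y * W s y))
                     (fun y => Rho y * (Wtot s - W s y))).
    + apply (dlim_mult (fun y => / 2 * (drho y - 2 * slope y)) (fun y => W s y * W s y)).
      * apply (dlim_mult (fun _ => / 2) (fun y => drho y - 2 * slope y)). apply dlim_const.
        apply (dlim_minus drho (fun y => 2 * slope y)). auto.
        apply (dlim_mult (fun _ => 2) slope). apply dlim_const. auto.
      * apply (dlim_mult (W s) (W s)); apply W_der; auto.
    + apply (dlim_mult Rho (fun y => Wtot s - W s y)). apply Rho_der; auto.
      apply (dlim_minus (fun _ => Wtot s) (W s)). apply dlim_const. apply W_der; auto.
  - apply (dlim_mult drho (w s)). auto. apply Hwy; auto.
Qed.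

Lemma slope_der_left y : y < M0 -> derivable_pt_lim slope y 0.
Proof.
  intros Hy. apply (dlim_local (fun _ => 0) slope y 0 (M0 - y)); [lra| |apply dlim_const].
  intros z Hz. apply Rabs_def2 in Hz. unfold slope. rewrite Heta0 by lra. ring.
Qed.

Lemma slope_der_right y : M0 < y -> derivable_pt_lim slope y (deta y * dg y + eta y * ddg y).
Proof. intros Hy. unfold slope. apply (dlim_mult eta dg). apply Heta. apply dg_der; auto. Qed.

Lemma slope_cw a c y : (c <= M0 \/ M0 <= a) -> a <= y <= c ->
  cont_within (fun z => a <= z <= c) slope y.
Proof.
  intros Hac Hy. destruct (Rlt_dec y M0) as [Hlt|Hge].
  { eapply cw_of_d. apply slope_der_left; auto. }
  destruct (Rlt_dec M0 y) as [Hgt|Hle].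
  { eapply cw_of_d. apply slope_der_right; auto. }
  replace y with M0 by lra. destruct Hac as [Hc|Ha].
  - intros eps He. exists 1. split; [lra|]. intros z Hz _. unfold slope.
    assert (Hz0 : eta z = 0) by (destruct (Req_dec z M0) as [->|]; [apply eta_M0|apply Heta0; lra]).
    rewrite eta_M0, Hz0, Rmult_0_l, Rmult_0_l, Rminus_diag, Rabs_R0; lra.
  - apply cw_mult. apply cw_of_cpt, eta_cpt.
    apply cw_sub with (S1 := fun z => M0 <= z); [intros; lra|].
    apply (cw_of_dw _ _ (ddg M0)); [lra|]. apply Hddg; lra.
Qed.

Lemma gap_nonneg_left s y : 0 < s < T -> 0 < y < M0 -> y <> A -> 0 <= gap s y (ddf y) 0.
Proof.
  intros Hs Hy HyA. unfold gap, slope. rewrite Heta0 by lra.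
  rewrite drho_df by lra. rewrite Hrf by lra.
  assert (H1 : y * df y <= Cf * f y) by (apply HF2; lra).
  assert (H2 : ddf y <= 0) by (apply HF4; auto; lra).
  assert (H3 : Rho y + ddf y >= 0) by (rewrite <- Rint_f_Rho by lra; apply HF3; auto; lra).
  assert (H4 : 0 <= w s y) by (apply w_nonneg; auto; lra).
  assert (H5 : 0 < f y) by (apply Hfpos; lra).
  assert (H6 : U s <= 0) by (apply U_le0; auto).
  assert (0 <= U s * (y * df y - Cf * f y) * w s y) by (apply Rmult_le_pos; [nra|auto]).
  assert (0 <= 2 * beta * f y * (w s y * w s y)).
  { pose proof (Rle_0_sqr (w s y)); unfold Rsqr in *. apply Rmult_le_pos; auto.
    apply Rmult_le_pos; lra. }
  assert (0 <= / 2 * (2 * 0 - ddf y) * (W s y * W s y)).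
  { pose proof (Rle_0_sqr (W s y)); unfold Rsqr in *. apply Rmult_le_pos; auto.
    apply Rmult_le_pos; lra. }
  assert (0 <= (Rho y + ddf y) * w s y) by nra.
  nra.
Qed.

(* On [M0,B] the cross term is absorbed by (FG2) through the quadratic form lemma. *)
Lemma gap_nonneg_mid s y : 0 < s < T -> M0 < y < B ->
  0 <= gap s y (ddf y) (deta y * dg y + eta y * ddg y).
Proof.
  intros Hs Hy. unfold gap, slope.
  rewrite drho_df by lra. rewrite Hrf by lra.
  assert (H1 : y * df y <= Cf * f y) by (apply HF2; lra).
  assert (H3 : Rho y + ddf y >= 0) by (rewrite <- Rint_f_Rho by lra; apply HF3; lra).
  assert (H4 : 0 <= w s y) by (apply w_nonneg; auto; lra).
  assert (H5 : 0 < f y) by (apply Hfpos; lra).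
  assert (H6 : U s <= 0) by (apply U_le0; auto).
  destruct (HFG2 y ltac:(lra)) as [Ha Hb].
  destruct (HG2 y ltac:(lra)) as [Hdg0 Hddg0].
  assert (Hq : eta y * dg y ^ 2 <= beta * f y * ddg y).
  { assert (Hp : f y * ddg y > 0) by nra.
    unfold Rdiv in Ha. apply (Rmult_le_compat_r (f y * ddg y)) in Ha; [|lra].
    rewrite Rmult_assoc, Rinv_l in Ha by lra. lra. }
  pose proof (quad_form_nonneg beta (f y) (ddg y) (dg y) (eta y) (w s y) (W s y)
                Hddg0 (eta_nonneg y) Hq).
  assert (0 <= U s * (y * df y - Cf * f y) * w s y) by (apply Rmult_le_pos; [nra|auto]).
  assert (0 <= / 2 * (2 * deta y * dg y + eta y * ddg y - ddf y) * (W s y * W s y)).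
  { pose proof (Rle_0_sqr (W s y)); unfold Rsqr in *. apply Rmult_le_pos; auto.
    apply Rmult_le_pos; lra. }
  assert (0 <= (Rho y + ddf y) * w s y) by nra.
  nra.
Qed.

(* On (B,oo), slope = g' and (G3) plays the role of (FG2). *)
Lemma gap_nonneg_right s y : 0 < s < T -> B < y ->
  0 <= gap s y (ddg y) (deta y * dg y + eta y * ddg y).
Proof.
  intros Hs Hy. unfold gap, slope.
  rewrite drho_dg by lra. rewrite Hrg by lra. rewrite deta_right, Heta1 by lra.
  assert (H4 : 0 <= w s y) by (apply w_nonneg; auto; lra).
  assert (H5 : 0 < g y) by (apply Hgpos; lra).
  assert (H6 : U s <= 0) by (apply U_le0; auto).
  destruct (HG2 y ltac:(lra)) as [Hdg0 Hddg0].
  assert (Hq : 1 * dg y ^ 2 <= beta * g y * ddg y).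
  { assert (Hp : g y * ddg y > 0) by nra. pose proof (HG3 y ltac:(lra)) as Ha.
    unfold Rdiv in Ha. apply (Rmult_le_compat_r (g y * ddg y)) in Ha; [|lra].
    rewrite Rmult_assoc, Rinv_l in Ha by lra. lra. }
  pose proof (quad_form_nonneg beta (g y) (ddg y) (dg y) 1 (w s y) (W s y) Hddg0 ltac:(lra) Hq).
  assert (H7 : y * dg y - Cf * g y <= 0).
  { assert (y * dg y <= 0) by nra. assert (0 < Cf * g y) by (apply Rmult_lt_0_compat; lra). lra. }
  assert (0 <= U s * (y * dg y - Cf * g y) * w s y) by (apply Rmult_le_pos; [nra|auto]).
  assert (0 <= Rho y) by (apply Rho_nonneg; lra).
  assert (0 <= (Rho y + ddg y) * w s y) by nra.
  nra.
Qed.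

Definition dissip s e y := RInt (ibp_density s) e y - RInt (target s) e y - Omega s y.

Lemma target_cpt s y : 0 < s < T -> 0 < y -> continuity_pt (target s) y.
Proof.
  intros Hs Hy. unfold target. cpt_split.
  all: first [apply rho_cpt | apply w_cpt]; auto.
Qed.

Lemma Omega_cw s (S : R -> Prop) y : 0 < s < T -> 0 < y ->
  cont_within S slope y -> cont_within S (Omega s) y.
Proof.
  intros Hs Hy Hm. unfold Omega.
  assert (HW : cont_within S (W s) y) by (apply cw_of_cpt, W_cpt; auto).
  assert (HD : cont_within S drho y) by (apply cw_of_cpt, drho_cpt; auto).
  apply cw_minus; [apply cw_plus|apply cw_mult; [auto|apply cw_of_cpt, w_cpt; auto]].
  - apply cw_mult; [|apply cw_mult; auto].
    apply cw_mult; [apply cw_const|]. apply cw_minus; auto. apply cw_mult; auto. apply cw_const.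
  - apply cw_mult. eapply cw_of_d; apply Rho_der; auto.
    apply cw_minus; auto. apply cw_const.
Qed.

Lemma dissip_piece s e a c (d2 dm : R -> R) : 0 < s < T -> 0 < e <= a -> a <= c ->
  (c <= M0 \/ M0 <= a) ->
  (forall y, a < y < c -> derivable_pt_lim drho y (d2 y)) ->
  (forall y, a < y < c -> derivable_pt_lim slope y (dm y)) ->
  (forall y, a < y < c -> 0 <= gap s y (d2 y) (dm y)) ->
  dissip s e a <= dissip s e c.
Proof.
  intros Hs He Hac Hpiece H2 Hm Hgap.
  apply (mono_within (fun z => a <= z <= c) (dissip s e)
           (fun y => ibp_density s y - target s y - Omega_deriv s y (d2 y) (dm y))); try (intros; lra).
  - intros y Hy. unfold dissip. apply cw_minus; [apply cw_minus|].
    + apply cw_sub with (S1 := fun z => e <= z); [intros; lra|].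
      apply RInt_cw_pos; try lra. intros; apply ibp_density_cpt; auto.
    + apply cw_sub with (S1 := fun z => e <= z); [intros; lra|].
      apply RInt_cw_pos; try lra. intros; apply target_cpt; auto.
    + apply Omega_cw; try lra. apply slope_cw; auto.
  - intros y Hy. unfold dissip. apply dlim_minus; [apply dlim_minus|].
    + apply ftc_pos; try lra. intros; apply ibp_density_cpt; auto.
    + apply ftc_pos; try lra. intros; apply target_cpt; auto.
    + apply Omega_der; auto; lra.
  - intros y Hy. rewrite gap_eq. auto.
Qed.

Lemma dissipation s e b : 0 < s < T -> 0 < e < A -> B < b ->
  RInt (ibp_density s) e b - RInt (target s) e b >= Omega s b - Omega s e.
Proof.
  intros Hs He Hb.
  assert (P1 : dissip s e e <= dissip s e A).
  { apply (dissip_piece s e e A ddf (fun _ => 0)); try lra.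
    - intros; apply drho_d2f; lra.
    - intros; apply slope_der_left; lra.
    - intros; apply gap_nonneg_left; auto; lra. }
  assert (P2 : dissip s e A <= dissip s e M0).
  { apply (dissip_piece s e A M0 ddf (fun _ => 0)); try lra.
    - intros; apply drho_d2f; lra.
    - intros; apply slope_der_left; lra.
    - intros; apply gap_nonneg_left; auto; lra. }
  assert (P3 : dissip s e M0 <= dissip s e B).
  { apply (dissip_piece s e M0 B ddf (fun y => deta y * dg y + eta y * ddg y)); try lra.
    - intros; apply drho_d2f; lra.
    - intros; apply slope_der_right; lra.
    - intros; apply gap_nonneg_mid; auto; lra. }
  assert (P4 : dissip s e B <= dissip s e b).
  { apply (dissip_piece s e B b ddg (fun y => deta y * dg y + eta y * ddg y)); try lra.
    - intros; apply drho_d2g; lra.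
    - intros; apply slope_der_right; lra.
    - intros; apply gap_nonneg_right; auto; lra. }
  unfold dissip in *. rewrite !RInt_point in P1. unfold zero in P1; simpl in P1. lra.
Qed.

Definition C_dens := 3 * K * C * C + 4 * Unorm * K * C + 2 * K * C.
Definition C_flux := K * C + K * C * C + Unorm * K * C.
Definition C_flux0 := K * (C + (C + Unorm * A) * C).

Lemma constants_nonneg : 0 <= C_dens /\ 0 <= C_flux /\ 0 <= C_flux0.
Proof.
  pose proof K_ge0. pose proof C_ge0. pose proof Unorm_ge0.
  assert (0 <= K * C) by nra. assert (0 <= Unorm * A) by nra.
  unfold C_dens, C_flux, C_flux0. repeat split; nra.
Qed.

Lemma W_abs_le s y : 0 < s < T -> 0 <= y -> Rabs (W s y) <= C.
Proof. intros. rewrite Rabs_right by (apply Rle_ge, W_nonneg; auto). apply W_le_C; auto. Qed.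

Lemma ibp_density_bd s y : 0 < s < T -> 0 < y ->
  Rabs (ibp_density s y) <= C_dens * ((1 + y) * exp (- y)).
Proof.
  intros Hs Hy. pose proof K_ge0. pose proof C_ge0. pose proof Unorm_ge0.
  destruct (HK y ltac:(lra)) as [Hr Hd]. destruct (w_decay s y Hs Hy) as [Hw Hwy'].
  pose proof (U_bd s Hs) as HU. pose proof (W_abs_le s y Hs ltac:(lra)) as HWC.
  destruct (W_tail_bd s y Hs ltac:(lra)) as [HR1 HR2].
  assert (HR : Rabs (Wtot s - W s y) <= C * exp (- y)) by (rewrite Rabs_right; lra).
  assert (HwC : Rabs (w s y) <= C) by apply (w_bounded s y Hs Hy).
  assert (Hyy : Rabs y <= y) by (rewrite Rabs_right; lra).
  pose proof (exp_pos (- y)) as Hey. set (E := exp (- y)) in *.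
  assert (T1 : Rabs (2 * rho y * (w s y * w s y)) <= 2 * (K * (C * (C * E)))).
  { rewrite Rmult_assoc. apply abs_mul_le. rewrite Rabs_right; lra.
    apply abs_mul_le; auto. apply abs_mul_le; auto. }
  assert (T2 : Rabs (3 * U s * rho y * w s y) <= 3 * Unorm * K * (C * E)).
  { repeat apply abs_mul_le; auto. rewrite Rabs_right; lra. }
  assert (T3 : Rabs (U s * y * drho y * w s y) <= Unorm * y * K * (C * E)).
  { repeat apply abs_mul_le; auto. }
  assert (T4 : Rabs (drho y * W s y * w s y) <= K * C * (C * E)) by (repeat apply abs_mul_le; auto).
  assert (T5 : Rabs (rho y * (Wtot s - W s y)) <= K * (C * E)) by (apply abs_mul_le; auto).
  assert (T6 : Rabs (drho y * wy s y) <= K * (C * E)) by (apply abs_mul_le; auto).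
  unfold ibp_density. eapply Rle_trans; [apply abs_sum6_le|]. unfold C_dens.
  assert (0 <= Unorm * K * C * E) by (repeat apply Rmult_le_pos; lra).
  assert (0 <= K * C * C * E) by (repeat apply Rmult_le_pos; lra).
  assert (0 <= K * C * E) by (repeat apply Rmult_le_pos; lra).
  assert (Unorm * y * K * (C * E) = y * (Unorm * K * C * E)) by ring.
  assert (0 <= y * (Unorm * K * C * E)) by (apply Rmult_le_pos; lra).
  nra.
Qed.

Lemma flux_bd s y : 0 < s < T -> 0 < y -> Rabs (flux s y) <= C_flux * ((1 + y) * exp (- y)).
Proof.
  intros Hs Hy. pose proof K_ge0. pose proof C_ge0. pose proof Unorm_ge0.
  destruct (HK y ltac:(lra)) as [Hr Hd]. destruct (w_decay s y Hs Hy) as [Hw Hwy'].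
  pose proof (U_bd s Hs) as HU. pose proof (W_abs_le s y Hs ltac:(lra)) as HWC.
  pose proof (exp_pos (- y)) as Hey. set (E := exp (- y)) in *.
  assert (HI : Rabs (W s y + U s * y) <= C + Unorm * y).
  { eapply Rle_trans. apply Rabs_triang. rewrite Rabs_mult, (Rabs_right y) by lra.
    apply Rplus_le_compat; auto. apply Rmult_le_compat_r; lra. }
  assert (T1 : Rabs (rho y * wy s y) <= K * (C * E)) by (apply abs_mul_le; auto).
  assert (T2 : Rabs (rho y * (W s y + U s * y) * w s y) <= K * (C + Unorm * y) * (C * E))
    by (repeat apply abs_mul_le; auto).
  unfold flux, Rminus. eapply Rle_trans; [apply Rabs_triang|]. rewrite Rabs_Ropp. unfold C_flux.
  assert (0 <= Unorm * K * C * E) by (repeat apply Rmult_le_pos; lra).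
  assert (0 <= K * C * C * E) by (repeat apply Rmult_le_pos; lra).
  assert (0 <= K * C * E) by (repeat apply Rmult_le_pos; lra).
  assert (K * (C + Unorm * y) * (C * E) = K * C * C * E + y * (Unorm * K * C * E)) by ring.
  assert (0 <= y * (Unorm * K * C * E)) by (apply Rmult_le_pos; lra).
  nra.
Qed.

(* Near y = 0 the flux is O(y), since rho(y) <= K y. *)
Lemma flux_bd0 s y : 0 < s < T -> 0 < y <= A -> Rabs (flux s y) <= C_flux0 * y.
Proof.
  intros Hs Hy. pose proof K_ge0. pose proof C_ge0. pose proof Unorm_ge0.
  destruct (w_bounded s y Hs ltac:(lra)) as [Hw Hwy'].
  pose proof (U_bd s Hs) as HU. pose proof (W_abs_le s y Hs ltac:(lra)) as HWC.
  assert (HI : Rabs (W s y + U s * y) <= C + Unorm * A).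
  { eapply Rle_trans. apply Rabs_triang. rewrite Rabs_mult, (Rabs_right y) by lra.
    apply Rplus_le_compat; auto. apply Rmult_le_compat; try lra. apply Rabs_pos. }
  assert (Hry : Rabs (rho y) <= K * y)
    by (rewrite Rabs_right; [apply rho_le_lin; lra|apply Rle_ge, Hrho0; lra]).
  assert (T1 : Rabs (rho y * wy s y) <= K * y * C) by (apply abs_mul_le; auto).
  assert (T2 : Rabs (rho y * (W s y + U s * y) * w s y) <= K * y * (C + Unorm * A) * C)
    by (repeat apply abs_mul_le; auto).
  unfold flux, Rminus. eapply Rle_trans; [apply Rabs_triang|]. rewrite Rabs_Ropp.
  unfold C_flux0. nra.
Qed.

Lemma rho_wt_ex s a c : 0 < s < T -> 0 < a <= c -> ex_RInt (fun y => rho y * wt s y) a c.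
Proof. intros. apply ex_RInt_pos; auto; try lra. intros; apply rho_wt_cpt; auto. Qed.

Lemma rho_wt_far s a c : 0 < s < T -> 1 <= a <= c ->
  Rabs (RInt (fun y => rho y * wt s y) a c) <= (C_dens + 2 * C_flux) * ((2 + a) * exp (- a)).
Proof.
  intros Hs Hac. rewrite ibp_identity by (auto; lra).
  destruct constants_nonneg as [Hd [Hf _]].
  pose proof (RInt_exp_tail (ibp_density s) C_dens a c Hd ltac:(lra)
                (fun y Hy => ibp_density_cpt s y Hs Hy) (fun y Hy => ibp_density_bd s y Hs Hy)).
  pose proof (flux_bd s c Hs ltac:(lra)). pose proof (flux_bd s a Hs ltac:(lra)).
  pose proof (exp_tail_decr a c ltac:(lra)). pose proof (exp_pos (- c)). pose proof (exp_pos (- a)).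
  assert (C_flux * ((1 + c) * exp (- c)) <= C_flux * ((2 + a) * exp (- a)))
    by (apply Rmult_le_compat_l; nra).
  assert (C_flux * ((1 + a) * exp (- a)) <= C_flux * ((2 + a) * exp (- a)))
    by (apply Rmult_le_compat_l; nra).
  unfold Rminus. eapply Rle_trans. apply Rabs_triang. rewrite Rabs_Ropp.
  eapply Rle_trans. apply Rplus_le_compat_r. apply Rabs_triang. lra.
Qed.

Lemma rho_wt_near0 s a c : 0 < s < T -> 0 < a <= c -> c <= A ->
  Rabs (RInt (fun y => rho y * wt s y) a c) <= (C_dens + 2 * C_flux0) * c.
Proof.
  intros Hs Hac HcA. rewrite ibp_identity by (auto; lra).
  destruct constants_nonneg as [Hd [_ Hfl0]].
  assert (H1 : Rabs (RInt (ibp_density s) a c) <= C_dens * (c - a)).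
  { apply RInt_abs_le; try lra.
    - apply ex_RInt_pos; try lra. intros; apply ibp_density_cpt; auto.
    - intros y Hy. eapply Rle_trans. apply ibp_density_bd; auto; lra.
      pose proof (exp_bd y ltac:(lra)). rewrite <- (Rmult_1_r C_dens) at 2.
      apply Rmult_le_compat_l; auto. }
  pose proof (flux_bd0 s c Hs ltac:(lra)). pose proof (flux_bd0 s a Hs ltac:(lra)).
  unfold Rminus. eapply Rle_trans. apply Rabs_triang. rewrite Rabs_Ropp.
  eapply Rle_trans. apply Rplus_le_compat_r. apply Rabs_triang.
  assert (C_flux0 * a <= C_flux0 * c) by (apply Rmult_le_compat_l; lra).
  assert (C_dens * (c - a) <= C_dens * c) by (apply Rmult_le_compat_l; lra). lra.
Qed.

(* Beyond B, every term of Omega is nonnegative. *)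
Lemma Omega_far_nonneg s b : 0 < s < T -> B < b -> 0 <= Omega s b.
Proof.
  intros Hs Hb. unfold Omega, slope. rewrite Heta1 by lra. rewrite drho_dg by lra.
  destruct (HG2 b ltac:(lra)) as [Hdg0 _].
  pose proof (Rho_nonneg b ltac:(lra)). destruct (W_tail_bd s b Hs ltac:(lra)) as [HR _].
  pose proof (w_nonneg s b Hs ltac:(lra)). pose proof (Rle_0_sqr (W s b)). unfold Rsqr in *.
  assert (0 <= / 2 * (dg b - 2 * (1 * dg b)) * (W s b * W s b)) by (apply Rmult_le_pos; lra).
  assert (0 <= Rho b * (Wtot s - W s b)) by (apply Rmult_le_pos; lra).
  assert (0 <= - dg b * w s b) by (apply Rmult_le_pos; lra). lra.
Qed.

(* Near 0, Omega is O(e), using rho(0) = 0, rho'(0) >= 0 and the Lipschitz bound on rho'. *)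
Lemma Omega_near0_le s e : 0 < s < T -> 0 < e < A ->
  Omega s e <= / 2 * K * (C * C) * (e * e) + K * C * e + L * C * e.
Proof.
  intros Hs He. unfold Omega, slope. rewrite Heta0 by lra. rewrite Rmult_0_l, Rmult_0_r, Rminus_0_r.
  pose proof K_ge0. pose proof C_ge0. pose proof L_ge0. pose proof drho_0.
  destruct (HK e ltac:(lra)) as [_ Hd]. apply Rabs_le_between in Hd.
  pose proof (W_le_lin s e Hs ltac:(lra)). pose proof (W_nonneg s e Hs ltac:(lra)).
  pose proof (Rho_le_lin e ltac:(lra)). pose proof (Rho_nonneg e ltac:(lra)).
  destruct (W_tail_bd s e Hs ltac:(lra)) as [HR1 HR2]. pose proof (exp_opp_le1 e ltac:(lra)).
  pose proof (w_nonneg s e Hs ltac:(lra)).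
  assert (HwC : w s e <= C) by (destruct (w_bounded s e Hs ltac:(lra)) as [Hw _];
                                 apply Rabs_le_between in Hw; lra).
  pose proof (HL e 0 ltac:(lra) ltac:(lra)) as HLe. rewrite Rminus_0_r, (Rabs_right e) in HLe by lra.
  apply Rabs_le_between in HLe.
  assert (T1 : / 2 * drho e * (W s e * W s e) <= / 2 * K * (C * C) * (e * e)).
  { assert (0 <= W s e * W s e) by (apply Rmult_le_pos; lra).
    assert (W s e * W s e <= (C * e) * (C * e)) by (apply Rmult_le_compat; lra).
    assert (/ 2 * drho e * (W s e * W s e) <= / 2 * K * (W s e * W s e))
      by (apply Rmult_le_compat_r; lra).
    assert (/ 2 * K * (W s e * W s e) <= / 2 * K * ((C * e) * (C * e)))
      by (apply Rmult_le_compat_l; lra).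
    nra. }
  assert (HRC : Wtot s - W s e <= C).
  { assert (C * exp (- e) <= C * 1) by (apply Rmult_le_compat_l; lra). lra. }
  assert (T2 : Rho e * (Wtot s - W s e) <= K * C * e).
  { replace (K * C * e) with ((K * e) * C) by ring. apply Rmult_le_compat; lra. }
  assert (T3 : - (drho e * w s e) <= L * C * e).
  { replace (L * C * e) with ((L * e) * C) by ring.
    replace (- (drho e * w s e)) with ((- drho e) * w s e) by ring.
    destruct (Rle_dec 0 (- drho e)). apply Rmult_le_compat; lra.
    assert (0 <= drho e * w s e) by (apply Rmult_le_pos; lra).
    assert (0 <= L * e * C) by (apply Rmult_le_pos; [apply Rmult_le_pos|]; lra). lra. }
  replace (/ 2 * (drho e - 0) * (W s e * W s e)) with (/ 2 * drho e * (W s e * W s e)) by ring. lra.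
Qed.

(** ** Completing the square *)

(* 2(1-beta) rho w^2 >= 2(1-beta)(2 lam rho w - lam^2 rho) with lam = X/P, and
   U >= -Unorm, integrated against rho w >= 0. *)
Lemma target_integral_ge s e b : 0 < s < T -> 0 < e <= b -> 0 < RInt rho e b ->
  RInt (target s) e b >=
    2 * (1 - beta) * (RInt (fun y => rho y * w s y) e b * RInt (fun y => rho y * w s y) e b)
      / RInt rho e b
    - Unorm * (3 + Cf) * RInt (fun y => rho y * w s y) e b.
Proof.
  intros Hs Heb HP.
  set (X := RInt (fun y => rho y * w s y) e b). set (P := RInt rho e b).
  set (lam := X / P).
  set (c1 := 2 * (1 - beta) * 2 * lam - (3 + Cf) * Unorm).
  set (c2 := - (2 * (1 - beta) * (lam * lam))).
  assert (Hrw : ex_RInt (fun y => rho y * w s y) e b)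
    by (apply ex_RInt_pos; try lra; intros; apply cpt_mult; [apply rho_cpt|apply w_cpt]; auto).
  assert (Hr : ex_RInt rho e b) by (apply ex_RInt_pos; try lra; intros; apply rho_cpt; auto).
  assert (Hq : RInt (fun y => c1 * (rho y * w s y) + c2 * rho y) e b <= RInt (target s) e b).
  { apply RInt_le; try lra.
    - apply (ex_RInt_ext (fun y => scal c1 (rho y * w s y) + scal c2 (rho y))); [intros; reflexivity|].
      apply (@ex_RInt_plus R_NormedModule); apply (@ex_RInt_scal R_NormedModule); auto.
    - apply ex_RInt_pos; try lra. intros; apply target_cpt; auto.
    - intros y Hy. unfold target, c1, c2.
      pose proof (Hrho0 y ltac:(lra)). pose proof (w_nonneg s y Hs ltac:(lra)). pose proof (U_ge s Hs).
      assert (0 <= 2 * (1 - beta) * rho y * ((w s y - lam) * (w s y - lam))).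
      { apply Rmult_le_pos. apply Rmult_le_pos; lra. apply Rle_0_sqr. }
      assert (0 <= (3 + Cf) * (U s + Unorm) * (rho y * w s y)).
      { apply Rmult_le_pos. apply Rmult_le_pos; lra. apply Rmult_le_pos; lra. }
      assert (E : 2 * (1 - beta) * rho y * (w s y * w s y) + (3 + Cf) * U s * rho y * w s y
        - ((2 * (1 - beta) * 2 * lam - (3 + Cf) * Unorm) * (rho y * w s y)
           + - (2 * (1 - beta) * (lam * lam)) * rho y)
        = 2 * (1 - beta) * rho y * ((w s y - lam) * (w s y - lam))
          + (3 + Cf) * (U s + Unorm) * (rho y * w s y)) by ring.
      lra. }
  rewrite RInt_lincomb in Hq by auto. fold X P in Hq.
  assert (Ec : c1 * X + c2 * P = 2 * (1 - beta) * (X * X) / P - Unorm * (3 + Cf) * X).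
  { assert (HP' : P > 0) by exact HP. unfold c1, c2, lam. field. lra. }
  lra.
Qed.

Definition lo (n : nat) := A / (INR n + 2).
Definition hi (n : nat) := B + 1 + INR n.

Lemma lo_bounds n : 0 < lo n < A.
Proof.
  unfold lo. pose proof (pos_INR n). split. apply Rdiv_lt_0_compat; lra.
  apply (Rmult_lt_reg_r (INR n + 2)); [lra|]. unfold Rdiv. rewrite Rmult_assoc, Rinv_l by lra. nra.
Qed.

Lemma lo_le n N : (N <= n)%nat -> lo n <= A / (INR N + 1).
Proof.
  intros H. apply le_INR in H. pose proof (pos_INR N). unfold lo, Rdiv.
  apply Rmult_le_compat_l; [lra|]. apply Rinv_le_contravar; lra.
Qed.

Lemma lo_mono n m : (n <= m)%nat -> lo m <= lo n.
Proof.
  intros H. apply le_INR in H. unfold lo. pose proof (pos_INR n). unfold Rdiv.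
  apply Rmult_le_compat_l; [lra|]. apply Rinv_le_contravar; lra.
Qed.

Lemma hi_mono n m : (n <= m)%nat -> hi n <= hi m.
Proof. intros H. apply le_INR in H. unfold hi. lra. Qed.

Lemma hi_ge n : B + 1 <= hi n.
Proof. unfold hi. pose proof (pos_INR n). lra. Qed.

Lemma lo_small eps : eps > 0 -> exists N, forall n, (n >= N)%nat -> lo n < eps.
Proof.
  intros He. destruct (INR_unbounded (A / eps)) as [N HN]. exists N. intros n Hn.
  eapply Rle_lt_trans; [apply (lo_le n N Hn)|]. pose proof (pos_INR N).
  apply (Rmult_lt_reg_r (INR N + 1)); [lra|]. unfold Rdiv. rewrite Rmult_assoc, Rinv_l by lra.
  apply (Rmult_lt_compat_r eps) in HN; auto. unfold Rdiv in HN.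
  rewrite Rmult_assoc, Rinv_l in HN by lra. nra.
Qed.

Lemma hi_large M : exists N, forall n, (n >= N)%nat -> hi n >= M.
Proof.
  destruct (INR_unbounded M) as [N HN]. exists N. intros n Hn. apply le_INR in Hn. unfold hi. lra.
Qed.

Lemma cv_hi (F : R -> R) l : has_lim_inf F l -> Un_cv (fun n => F (hi n)) l.
Proof.
  intros H eps He. destruct (H eps He) as [M HM]. destruct (hi_large M) as [N HN]. exists N.
  intros n Hn. unfold R_dist. apply HM. apply HN; auto.
Qed.

Lemma cv_lo_small (u : nat -> R) c : (forall n, Rabs (u n) <= c * lo n) -> Un_cv u 0.
Proof.
  intros H eps He. destruct (Rle_dec c 0) as [Hc|Hc].
  - exists 0%nat. intros n _. unfold R_dist. rewrite Rminus_0_r. pose proof (lo_bounds n).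
    specialize (H n). assert (c * lo n <= 0) by nra. lra.
  - destruct (lo_small (eps / c)) as [N HN]. apply Rdiv_lt_0_compat; lra.
    exists N. intros n Hn. unfold R_dist. rewrite Rminus_0_r. specialize (HN n Hn).
    eapply Rle_lt_trans. apply H. apply (Rmult_lt_compat_l c) in HN; [|lra].
    replace (c * (eps / c)) with eps in HN by (field; lra). lra.
Qed.

Definition Gn s n := RInt (fun y => rho y * w s y) (lo n) (hi n).
Definition dGn s n := RInt (fun y => rho y * wt s y) (lo n) (hi n).
Definition Rhon n := RInt rho (lo n) (hi n).

Lemma dGn_diff s n m : 0 < s < T -> (n <= m)%nat ->
  Rabs (dGn s n - dGn s m) <= (C_dens + 2 * C_flux0) * lo n + (C_dens + 2 * C_flux) * (4 / hi n).
Proof.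
  intros Hs Hnm. unfold dGn.
  pose proof (lo_bounds n). pose proof (lo_bounds m). pose proof (lo_mono n m Hnm).
  pose proof (hi_mono n m Hnm). pose proof (hi_ge n). pose proof (hi_ge m).
  assert (E1 := RInt_Chasles (fun y => rho y * wt s y) (lo m) (lo n) (hi n)
                  (rho_wt_ex s (lo m) (lo n) Hs ltac:(lra)) (rho_wt_ex s (lo n) (hi n) Hs ltac:(lra))).
  assert (E2 := RInt_Chasles (fun y => rho y * wt s y) (lo m) (hi n) (hi m)
                  (rho_wt_ex s (lo m) (hi n) Hs ltac:(lra)) (rho_wt_ex s (hi n) (hi m) Hs ltac:(lra))).
  unfold plus in E1, E2; simpl in E1, E2.
  pose proof (rho_wt_near0 s (lo m) (lo n) Hs ltac:(lra) ltac:(lra)).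
  pose proof (rho_wt_far s (hi n) (hi m) Hs ltac:(lra)).
  pose proof (exp_bd2 (hi n) ltac:(lra)). destruct constants_nonneg as [Hd [Hf _]].
  assert ((C_dens + 2 * C_flux) * ((2 + hi n) * exp (- hi n)) <= (C_dens + 2 * C_flux) * (4 / hi n))
    by (apply Rmult_le_compat_l; lra).
  replace (RInt (fun y => rho y * wt s y) (lo n) (hi n) - RInt (fun y => rho y * wt s y) (lo m) (hi m))
    with (- RInt (fun y => rho y * wt s y) (lo m) (lo n) - RInt (fun y => rho y * wt s y) (hi n) (hi m))
    by lra.
  unfold Rminus. eapply Rle_trans. apply Rabs_triang. rewrite !Rabs_Ropp. lra.
Qed.

Lemma dGn_cauchy e : e > 0 -> exists N, forall n m s, (n >= N)%nat -> (m >= N)%nat -> 0 < s < T ->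
  Rabs (dGn s n - dGn s m) <= e.
Proof.
  intros He. destruct constants_nonneg as [Hd [Hf Hf0']].
  set (Q := (C_dens + 2 * C_flux0) * A + 4 * (C_dens + 2 * C_flux)).
  assert (HQ : 0 <= Q) by (unfold Q; nra).
  destruct (INR_unbounded (Q / e)) as [N HN]. exists N. intros n m s Hn Hm Hs.
  assert (key : forall n m, (N <= n)%nat -> (n <= m)%nat -> Rabs (dGn s n - dGn s m) <= e).
  { clear n m Hn Hm. intros n m Hn Hnm. eapply Rle_trans. apply dGn_diff; auto.
    pose proof (lo_le n N Hn). apply le_INR in Hn. pose proof (pos_INR N).
    assert (Hhi : 4 / hi n <= 4 / (INR N + 1)).
    { unfold hi, Rdiv. apply Rmult_le_compat_l; [lra|]. apply Rinv_le_contravar; lra. }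
    assert (Q / (INR N + 1) <= e).
    { apply (Rmult_le_reg_r (INR N + 1)); [lra|]. unfold Rdiv. rewrite Rmult_assoc, Rinv_l, Rmult_1_r by lra.
      apply (Rmult_lt_compat_r e) in HN; auto. unfold Rdiv in HN.
      rewrite Rmult_assoc, Rinv_l, Rmult_1_r in HN by lra. nra. }
    assert ((C_dens + 2 * C_flux0) * lo n + (C_dens + 2 * C_flux) * (4 / hi n) <= Q / (INR N + 1)).
    { unfold Q. replace (((C_dens + 2 * C_flux0) * A + 4 * (C_dens + 2 * C_flux)) / (INR N + 1)) with
        ((C_dens + 2 * C_flux0) * (A / (INR N + 1)) + (C_dens + 2 * C_flux) * (4 / (INR N + 1)))
        by (field; lra).
      apply Rplus_le_compat; apply Rmult_le_compat_l; lra. }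
    lra. }
  destruct (Nat.le_gt_cases n m) as [Hle|Hgt]; [apply key; auto|].
  rewrite Rabs_minus_sym. apply key; auto. apply Nat.lt_le_incl; auto.
Qed.

(* The boundary terms at lo n and hi n. *)
Definition errn n := / 2 * K * (C * C) * (lo n * lo n) + K * C * lo n + L * C * lo n
  + C_flux0 * lo n + C_flux * (4 / hi n).

Lemma dGn_ge n s : 0 < Rhon n -> 0 < s < T ->
  dGn s n >= 2 * (1 - beta) * (Gn s n * Gn s n) / Rhon n - Unorm * (3 + Cf) * Gn s n - errn n.
Proof.
  intros HP Hs. pose proof (lo_bounds n) as He. pose proof (hi_ge n) as Hb.
  unfold dGn. rewrite ibp_identity by (auto; lra).
  assert (HI := dissipation s (lo n) (hi n) Hs ltac:(lra) ltac:(lra)).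
  assert (Hq := target_integral_ge s (lo n) (hi n) Hs ltac:(lra) HP).
  pose proof (Omega_far_nonneg s (hi n) Hs ltac:(lra)).
  pose proof (Omega_near0_le s (lo n) Hs ltac:(lra)).
  pose proof (flux_bd s (hi n) Hs ltac:(lra)) as Xb. apply Rabs_le_between in Xb.
  pose proof (flux_bd0 s (lo n) Hs ltac:(lra)) as Xe. apply Rabs_le_between in Xe.
  pose proof (exp_bd2 (hi n) ltac:(lra)). destruct constants_nonneg as [_ [Hf _]].
  pose proof (exp_pos (- hi n)).
  assert (C_flux * ((1 + hi n) * exp (- hi n)) <= C_flux * (4 / hi n)) by (apply Rmult_le_compat_l; nra).
  unfold errn, Gn, Rhon. lra.
Qed.

Lemma Rhon_cv : Un_cv Rhon rhoL1.
Proof.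
  apply (Un_cv_ext (fun n => Rho (hi n) - Rho (lo n))).
  { intros n. pose proof (lo_bounds n). pose proof (hi_ge n). unfold Rhon, Rho.
    symmetry. apply prim0_chasles; [apply rho_cw|lra]. }
  replace rhoL1 with (rhoL1 - 0) by ring. apply CV_minus. apply cv_hi, rhoL1_lim.
  apply (cv_lo_small _ K). intros n. pose proof (lo_bounds n).
  rewrite Rabs_right by (apply Rle_ge, Rho_nonneg; lra). apply Rho_le_lin; lra.
Qed.

Lemma Gn_cv s : 0 < s < T -> Un_cv (Gn s) (Gmass s).
Proof.
  intros Hs. apply (Un_cv_ext (fun n => Gpart s (hi n) - Gpart s (lo n))).
  { intros n. pose proof (lo_bounds n). pose proof (hi_ge n). unfold Gn, Gpart.
    symmetry. apply prim0_chasles; [intros; apply rho_w_cw; auto|lra]. }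
  replace (Gmass s) with (Gmass s - 0) by ring. apply CV_minus. apply cv_hi, Gmass_lim; auto.
  apply (cv_lo_small _ (K * C)). intros n. pose proof (lo_bounds n).
  unfold Gpart, prim0. apply (Rle_trans _ ((K * C) * (lo n - 0))); [|rewrite Rminus_0_r; lra].
  apply RInt_abs_le; try lra. apply prim0_ex; [intros; apply rho_w_cw; auto|lra].
  intros y Hy. rewrite Rabs_mult. destruct (HK y ltac:(lra)).
  apply Rmult_le_compat; try apply Rabs_pos; auto. apply (w_bounded s y Hs); lra.
Qed.

Lemma errn_cv : Un_cv errn 0.
Proof.
  pose proof K_ge0. pose proof C_ge0. pose proof L_ge0. destruct constants_nonneg as [_ [Hf Hf0']].
  unfold errn. replace 0 with (0 + 0) by ring. apply CV_plus.
  - apply (cv_lo_small _ (/ 2 * K * (C * C) * A + K * C + L * C + C_flux0)). intros n.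
    pose proof (lo_bounds n).
    assert (0 <= / 2 * K * (C * C)) by (apply Rmult_le_pos; [lra|nra]).
    assert (/ 2 * K * (C * C) * (lo n * lo n) <= / 2 * K * (C * C) * A * lo n).
    { set (c0 := / 2 * K * (C * C)) in *. replace (c0 * A * lo n) with (c0 * (A * lo n)) by ring.
      apply Rmult_le_compat_l; auto. apply Rmult_le_compat_r; lra. }
    assert (0 <= K * C * lo n) by (apply Rmult_le_pos; nra).
    assert (0 <= L * C * lo n) by (apply Rmult_le_pos; nra).
    assert (0 <= C_flux0 * lo n) by (apply Rmult_le_pos; nra).
    assert (0 <= / 2 * K * (C * C) * (lo n * lo n)) by (apply Rmult_le_pos; nra).
    rewrite Rabs_right by lra. nra.
  - intros eps He. destruct (hi_large (4 * C_flux / eps + 1)) as [N HN]. exists N. intros n Hn.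
    unfold R_dist. specialize (HN n Hn). pose proof (hi_ge n). rewrite Rminus_0_r.
    assert (Hb : 0 < hi n) by lra.
    rewrite Rabs_right by (apply Rle_ge, Rmult_le_pos; [lra|apply Rdiv_le_0_compat; lra]).
    apply (Rmult_lt_reg_r (hi n)); auto. replace (C_flux * (4 / hi n) * hi n) with (4 * C_flux) by (field; lra).
    assert (Hlt : 4 * C_flux / eps < hi n) by lra.
    apply (Rmult_lt_compat_r eps) in Hlt; auto.
    replace (4 * C_flux / eps * eps) with (4 * C_flux) in Hlt by (field; lra). lra.
Qed.

(** ** Passage to the limit *)

Lemma Gmass_derivative_bound t : 0 < t < T -> exists l, derivable_pt_lim Gmass t l /\
   l >= 2 * (1 - beta) / rhoL1 * (Gmass t) ^ 2 - Unorm * (3 + Cf) * Gmass t.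
Proof.
  intros Ht.
  assert (Hc : Cauchy_crit (dGn t)).
  { intros eps He. destruct (dGn_cauchy (eps / 2) ltac:(lra)) as [N HN]. exists N. intros n m Hn Hm.
    unfold R_dist. specialize (HN n m t Hn Hm Ht). lra. }
  destruct (Rcomplete.R_complete _ Hc) as [D HD].
  exists D. split.
  - set (r := Rmin t (T - t)). assert (Hr : 0 < r) by (unfold r; apply Rmin_pos; lra).
    assert (Hin : forall u, Rabs (u - t) < r -> 0 < u < T).
    { intros u Hu. apply Rabs_def2 in Hu.
      assert (r <= t) by apply Rmin_l. assert (r <= T - t) by apply Rmin_r. lra. }
    apply (derivable_pt_lim_of_limit (fun n s => Gn s n) (fun n s => dGn s n) Gmass D t r Hr); auto.
    + intros n s Hs. unfold Gn, dGn. apply Gpart_interval_der; auto.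
      pose proof (lo_bounds n). pose proof (hi_ge n). lra.
    + intros s Hs. apply Gn_cv; auto.
    + intros e He. destruct (dGn_cauchy e He) as [N HN]. exists N. intros n m s Hn Hm Hs. apply HN; auto.
  - destruct rhoL1_lim as [_ HrL].
    destruct (Rhon_cv (rhoL1 / 2) ltac:(lra)) as [N0 HN0].
    assert (HR : Un_cv (fun n => 2 * (1 - beta) * (Gn t n * Gn t n) * / Rhon n
                                 - Unorm * (3 + Cf) * Gn t n - errn n)
                       (2 * (1 - beta) * (Gmass t * Gmass t) * / rhoL1 - Unorm * (3 + Cf) * Gmass t - 0)).
    { apply CV_minus; [apply CV_minus|apply errn_cv].
      - apply CV_mult; [apply CV_mult|apply cv_inv; [lra|apply Rhon_cv]].
        apply cv_const. apply CV_mult; apply Gn_cv; auto.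
      - apply CV_mult. apply cv_const. apply Gn_cv; auto. }
    assert (HDl := cv_le (dGn t) _ _ _ N0 HD HR).
    replace (2 * (1 - beta) / rhoL1 * Gmass t ^ 2)
      with (2 * (1 - beta) * (Gmass t * Gmass t) * / rhoL1) by (field; lra).
    enough (2 * (1 - beta) * (Gmass t * Gmass t) * / rhoL1 - Unorm * (3 + Cf) * Gmass t - 0 <= D) by lra.
    apply HDl. intros n Hn. specialize (HN0 n Hn). unfold R_dist in HN0. apply Rabs_def2 in HN0.
    pose proof (dGn_ge n t ltac:(lra) Ht). unfold Rdiv in H. lra.
Qed.

End Lemma33.

Theorem lemma3p3
  (T : R) (HT : T > 0)
  (U : R -> R)
  (* U in C([0,T]), U <= 0 *)
  (HUc : forall x, 0 <= x <= T -> cont_within (fun z => 0 <= z <= T) U x)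
  (HUneg : forall x, 0 <= x <= T -> U x <= 0)
  (* Unorm = ||U||_{L^oo([0,T])} *)
  (Unorm : R)
  (HUnorm : is_lub (fun v => exists x, 0 <= x <= T /\ v = Rabs (U x)) Unorm)
  (* w and its classical partial derivatives d_t w, d_y w, d_y^2 w on H_T *)
  (w wt wy wyy : R -> R -> R)
  (Hwt : forall t y, 0 < t < T -> 0 < y -> derivable_pt_lim (fun s => w s y) t (wt t y))
  (Hwy : forall t y, 0 < t < T -> 0 < y -> derivable_pt_lim (w t) y (wy t y))
  (Hwyy : forall t y, 0 < t < T -> 0 < y -> derivable_pt_lim (wy t) y (wyy t y))
  (Hwc : cont2_on (fun t y => 0 < t < T /\ 0 <= y) w)
  (Hwtc : cont2_on (fun t y => 0 < t < T /\ 0 < y) wt)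
  (Hwyc : cont2_on (fun t y => 0 < t < T /\ 0 < y) wy)
  (Hwyyc : cont2_on (fun t y => 0 < t < T /\ 0 < y) wyy)
  (Hwpos : forall t y, 0 < t < T -> 0 < y -> w t y >= 0)
  (* the equation in H_T;  int_{+oo}^y w dy' = - int_y^oo w dy' *)
  (Hpde : forall t y, 0 < t < T -> 0 < y ->
      wt t y - (w t y) ^ 2
      + Rint (fun y' => w t y' + U t) 0 y * wy t y
      - 2 * U t * w t y
      - RintInf (w t) y
      - wyy t y = 0)
  (* boundary conditions *)
  (Hbc0 : forall t, 0 < t < T -> w t 0 = - U t)
  (Hbcinf : forall t, 0 < t < T -> has_lim_inf (w t) 0)
  (* sup_{H_T} (|w| + |d_y w|) e^y < oo *)
  (Hdecay : exists C, forall t y, 0 < t < T -> 0 < y ->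
      (Rabs (w t y) + Rabs (wy t y)) * exp y <= C)
  (* admissible weight *)
  (rho : R -> R) (Cf beta : R)
  (Hrho : admissible_weight rho Cf beta) :
  let G := fun s => RintInf (fun y => rho y * w s y) 0 in
  let rhoL1 := RintInf (fun y => Rabs (rho y)) 0 in
  forall t, 0 < t < T ->
    exists l, derivable_pt_lim G t l /\
      l >= 2 * (1 - beta) / rhoL1 * (G t) ^ 2 - Unorm * (3 + Cf) * G t.
Proof.
  intros G rhoL1 t Ht.
  destruct Hdecay as [C HC].
  destruct Hrho as (HCf & Hbeta & Hrho0 & (drho & Hdrho & Hdrhoc & (K & HK) & (L & HL)) & HL1 &
    A & M0 & B & f & df & ddf & g & dg & ddg & eta & deta & HA & HAM & HMB & Hrf & Hrg &
    Hdf & _ & Hddf & _ & Hdg & Hddg & _ & _ & _ & Heta & Heta0 & Heta1 & Hdeta &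
    Hf0 & Hfpos & HF2 & HF3 & HF4 & _ & _ & Hgpos & HG2 & HG3 & _ & _ & HFG2).
  exact (Gmass_derivative_bound T U Unorm w wt wy wyy C HT HUneg HUnorm Hwt Hwy Hwyy Hwc Hwtc
    Hwpos Hpde Hbc0 HC rho drho Cf beta K L A M0 B f df ddf g dg ddg eta deta HCf Hbeta Hrho0
    Hdrho Hdrhoc HK HL HL1 HA HAM HMB Hrf Hrg Hdf Hddf Hdg Hddg Heta Heta0 Heta1 Hdeta Hf0 Hfpos
    HF2 HF3 HF4 Hgpos HG2 HG3 HFG2 t Ht).
Qed.
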